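(* Let $d\geq1$ and fix a width $p\geq d+3$. For each $k\in\{1,\ldots,p\}$ let $\{B_{kr}:r\geq1\}$ be a set of basis functions. Let $\sigma:\mathbb{R}\to[0,1]$ be a continuous function which is continuously differentiable at at least one point, with nonzero derivative at that point. For $L\geq1$, vectors $W_k^{(1)}\in\mathbb{R}^d$ and $W_k^{(l)}\in\mathbb{R}^p$ ($2\le l\le L$), integers $q_k\geq1$ and real numbers $c_{kr},b_k^{(l)},b$, define the HDANN2 function on $[0,1]^d$ by $$x_k^{(1)}=\sigma\big({W_k^{(1)}}^\top\mathbf{x}+b_k^{(1)}\big),\qquad x_k^{(l)}=\sigma\big({W_k^{(l)}}^\top\mathbf{x}^{(l-1)}+b_k^{(l)}\big)\ (2\le l\le L),\quad k=1,\ldots,p,$$ where $\mathbf{x}^{(l)}=(x_1^{(l)},\ldots,x_p^{(l)})^\top$, and output $\mathrm{HDANN2}(\mathbf{x})=\sum_{k=1}^p\sum_{r=1}^{q_k}c_{kr}B_{kr}(x_k^{(L)})+b$. Then for any continuous $f:[0,1]^d\to\mathbb{R}$ and any $\epsilon>0$ there exist $L\geq1$, $q_k\geq1$, $W_k^{(l)}$ and $c_{kr},b_k^{(l)},b\in\mathbb{R}$ such that $$\sup_{\mathbf{x}\in[0,1]^d}|f(\mathbf{x})-\mathrm{HDANN2}(\mathbf{x})|<\epsilon.$$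
   Context: A set $\{B_r:[0,1]\to\mathbb{R}\,|\,r\geq1\}$ of functions is called a set of basis functions if for every continuous $\phi:[0,1]\to\mathbb{R}$ and every $\epsilon>0$ there exist $q\geq1$ and $c_1,\ldots,c_q,c\in\mathbb{R}$ with $\sup_{x\in[0,1]}|\phi(x)-(\sum_{r=1}^q c_rB_r(x)+c)|<\epsilon$. *)

From Stdlib Require Import Reals.
From Coquelicot Require Import Coquelicot.
Open Scope R_scope.

Fixpoint rsum (f : nat -> R) (m len : nat) : R :=
  match len with
  | O => 0
  | S l => f m + rsum f (S m) l
  end.
Definition sum1 (q : nat) (F : nat -> R) : R := rsum F 1 q.
Definition sum0 (n : nat) (F : nat -> R) : R := rsum F 0 n.

Definition cont01 (phi : R -> R) : Prop :=
  forall x, 0 <= x <= 1 -> forall eps, 0 < eps -> exists delta, 0 < delta /\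
    forall y, 0 <= y <= 1 -> Rabs (y - x) < delta -> Rabs (phi y - phi x) < eps.

(* Basis functions {B r | r >= 1} on [0,1] (the value B 0 is irrelevant). *)
Definition is_basis (B : nat -> R -> R) : Prop :=
  forall phi : R -> R, cont01 phi -> forall eps, 0 < eps ->
    exists (q : nat) (c : nat -> R) (c0 : R), (1 <= q)%nat /\
      forall x, 0 <= x <= 1 ->
        Rabs (phi x - (sum1 q (fun r => c r * B r x) + c0)) < eps.

(* Points of R^d are represented by x : nat -> R, coordinates 0..d-1. *)
Definition in_cube (d : nat) (x : nat -> R) : Prop :=
  forall i, (i < d)%nat -> 0 <= x i <= 1.

Definition cont_cube (d : nat) (f : (nat -> R) -> R) : Prop :=
  forall x, in_cube d x -> forall eps, 0 < eps -> exists delta, 0 < delta /\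
    forall y, in_cube d y ->
      (forall i, (i < d)%nat -> Rabs (y i - x i) < delta) ->
      Rabs (f y - f x) < eps.

Definition C1_at_nonzero (sigma : R -> R) (x0 : R) : Prop :=
  (exists delta, 0 < delta /\
     forall y, Rabs (y - x0) < delta -> ex_derive sigma y) /\
  continuous (Derive sigma) x0 /\ Derive sigma x0 <> 0.

(* Hidden layers, neurons indexed k = 0..p-1 (paper: 1..p).
   W1 k : R^d, b1 k : first-layer weights/biases;
   W l k : R^p, b l k : weights/biases of layer l (used for 2 <= l <= L).
   layer n x = x^{(n+1)}. *)
Fixpoint layer (sigma : R -> R) (d p : nat)
    (W1 : nat -> nat -> R) (b1 : nat -> R)
    (W : nat -> nat -> nat -> R) (b : nat -> nat -> R)
    (n : nat) (x : nat -> R) : nat -> R :=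
  match n with
  | O => fun k => sigma (sum0 d (fun i => W1 k i * x i) + b1 k)
  | S m => let prev := layer sigma d p W1 b1 W b m x in
           fun k => sigma (sum0 p (fun j => W (S (S m)) k j * prev j)
                            + b (S (S m)) k)
  end.

(* HDANN2 output with L >= 1 layers; B k r is the r-th basis function
   for neuron k (k = 0..p-1, r >= 1), q k >= 1, c k r coefficients. *)
Definition HDANN2 (sigma : R -> R) (d p : nat) (B : nat -> nat -> R -> R)
    (L : nat) (W1 : nat -> nat -> R) (b1 : nat -> R)
    (W : nat -> nat -> nat -> R) (b : nat -> nat -> R)
    (q : nat -> nat) (c : nat -> nat -> R) (b0 : R) (x : nat -> R) : R :=
  let xL := layer sigma d p W1 b1 W b (pred L) x in
  sum0 p (fun k => sum1 (q k) (fun r => c k r * B k r (xL k))) + b0.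

From Stdlib Require Import Reals Lra Lia FunctionalExtensionality List ClassicalEpsilon Classical.
From Coquelicot Require Import Coquelicot.
Open Scope R_scope.

(* (1) Shallow networks [c0 + sum_j c_j sigma (a_j s + b_j)] approximate every
   continuous function of one variable uniformly on compact intervals: s^n is
   the limit of n-th finite differences, with step proportional to s, of an
   n-fold average of sigma, normalised by a nonzero n-th difference of sigma
   (one exists because sigma is bounded and has a nonzero derivative); |s| is a
   uniform limit of the polynomials of the iteration q <- q + (s^2 - q^2)/2;
   tent functions are combinations of |.|, and tents interpolate continuous
   functions.

   (2) A sigma-neuron whose input is scaled by a small dl around x0 and whose
   output is read off affinely is almost linear.  So in a network of width
   p >= d+3 the first d neurons transport the input, and three more neurons
   serve as registers: an accumulator a, a scratch register t, and u, which
   evaluates one sigma-unit at a time.  Unit by unit the network adds to t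
   shallow approximations of h_i(x_i), then adds to a a shallow approximation
   of g(t); hence any K g(sum_i h_i(x_i)) can be added to the accumulator.

   (3) f is uniformly close to sum_c f(c/N) prod_i tent(N x_i - c_i), and each
   product of tents is within O(eta) of exp(sum_i ln(tent_i + eta)).  Finally
   the accumulator neuron takes values in [0,1], where its basis functions
   approximate the affine read-out of a. *)

Lemma rsum_ext f g m n :
  (forall i, (m <= i < m + n)%nat -> f i = g i) -> rsum f m n = rsum g m n.
Proof.
  revert m; induction n; intros m H; simpl; auto.
  rewrite H by lia. f_equal. apply IHn. intros; apply H; lia.
Qed.

Lemma rsum_plus f g m n : rsum (fun i => f i + g i) m n = rsum f m n + rsum g m n.
Proof. revert m; induction n; intros m; simpl; [lra|]. rewrite IHn; lra. Qed.

Lemma rsum_minus f g m n : rsum (fun i => f i - g i) m n = rsum f m n - rsum g m n.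
Proof. revert m; induction n; intros m; simpl; [lra|]. rewrite IHn; lra. Qed.

Lemma rsum_scal c f m n : rsum (fun i => c * f i) m n = c * rsum f m n.
Proof. revert m; induction n; intros m; simpl; [lra|]. rewrite IHn; lra. Qed.

Lemma rsum_zero m n : rsum (fun _ => 0) m n = 0.
Proof. revert m; induction n; intros m; simpl; [lra|]. rewrite IHn; lra. Qed.

Lemma rsum_le f g m n :
  (forall i, (m <= i < m + n)%nat -> f i <= g i) -> rsum f m n <= rsum g m n.
Proof.
  revert m; induction n; intros m H; simpl; [lra|].
  assert (f m <= g m) by (apply H; lia).
  assert (rsum f (S m) n <= rsum g (S m) n) by (apply IHn; intros; apply H; lia).
  lra.
Qed.

Lemma Rabs_rsum f m n : Rabs (rsum f m n) <= rsum (fun i => Rabs (f i)) m n.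
Proof.
  revert m; induction n; intros m; simpl.
  - rewrite Rabs_R0; lra.
  - eapply Rle_trans; [apply Rabs_triang|]. specialize (IHn (S m)). lra.
Qed.

Lemma rsum_nonneg f m n :
  (forall i, (m <= i < m + n)%nat -> 0 <= f i) -> 0 <= rsum f m n.
Proof. intros H. rewrite <- (rsum_zero m n). apply rsum_le. auto. Qed.

Lemma rsum_S_last f m n : rsum f m (S n) = rsum f m n + f (m + n)%nat.
Proof.
  revert m; induction n; intros m.
  - simpl. rewrite Nat.add_0_r. lra.
  - change (rsum f m (S (S n))) with (f m + rsum f (S m) (S n)).
    change (rsum f m (S n)) with (f m + rsum f (S m) n).
    rewrite IHn. replace (S m + n)%nat with (m + S n)%nat by lia. lra.
Qed.

Lemma rsum_add_len f m n1 n2 : rsum f m (n1 + n2) = rsum f m n1 + rsum f (m + n1) n2.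
Proof.
  revert m; induction n1; intros m; simpl.
  - rewrite Nat.add_0_r; lra.
  - rewrite IHn1. replace (S m + n1)%nat with (m + S n1)%nat by lia. lra.
Qed.

Definition delta_nat (j k : nat) : R := if Nat.eqb j k then 1 else 0.

Lemma rsum_delta (v : nat -> R) k m n : (m <= k < m + n)%nat ->
  rsum (fun j => delta_nat j k * v j) m n = v k.
Proof.
  unfold delta_nat. revert m; induction n; intros m Hk; [lia|]. simpl.
  destruct (Nat.eqb_spec m k) as [->|Hmk].
  - rewrite (rsum_ext _ (fun _ => 0)), rsum_zero; [lra|].
    intros i Hi. destruct (Nat.eqb_spec i k); [lia|lra].
  - rewrite IHn by lia. lra.
Qed.

Lemma rsum_ge_term f m n k :
  (forall i, 0 <= f i) -> (m <= k < m + n)%nat -> f k <= rsum f m n.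
Proof.
  revert m; induction n; intros m Hf Hk; [lia|]. simpl.
  destruct (Nat.eq_dec m k) as [->|Hmk].
  - assert (0 <= rsum f (S k) n) by (apply rsum_nonneg; auto). lra.
  - assert (f k <= rsum f (S m) n) by (apply IHn; auto; lia). specialize (Hf m). lra.
Qed.

Lemma Rabs_sum0_mult_bound m (w v : nat -> R) U :
  (forall j, (j < m)%nat -> Rabs (v j) <= U) ->
  Rabs (sum0 m (fun j => w j * v j)) <= sum0 m (fun j => Rabs (w j)) * U.
Proof.
  intros H. unfold sum0. eapply Rle_trans; [apply Rabs_rsum|].
  rewrite <- (Rmult_comm U), <- rsum_scal. apply rsum_le. intros i Hi.
  rewrite Rabs_mult. assert (Rabs (v i) <= U) by (apply H; lia).
  pose proof (Rabs_pos (w i)). nra.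
Qed.

Lemma Rabs_sum0_mult_sub m (w u v : nat -> R) eta :
  (forall j, (j < m)%nat -> Rabs (u j - v j) <= eta) ->
  Rabs (sum0 m (fun j => w j * u j) - sum0 m (fun j => w j * v j))
    <= sum0 m (fun j => Rabs (w j)) * eta.
Proof.
  intros H. unfold sum0. rewrite <- rsum_minus.
  rewrite (rsum_ext _ (fun j => w j * (u j - v j))) by (intros; ring).
  apply Rabs_sum0_mult_bound. auto.
Qed.

Definition cont_R (g : R -> R) : Prop := forall x, continuous g x.

Lemma cont_R_ext f g : (forall s, f s = g s) -> cont_R f -> cont_R g.
Proof. intros E Hf x. apply (continuous_ext f); auto. Qed.

Lemma cont_R_const c : cont_R (fun _ => c).
Proof. intros x. apply continuous_const. Qed.

Lemma cont_R_affine a b : cont_R (fun s => a * s + b).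
Proof.
  intros x. apply (continuous_plus (fun s => a * s) (fun _ => b)); [|apply continuous_const].
  apply (continuous_mult (fun _ => a) (fun s => s)); [apply continuous_const|apply continuous_id].
Qed.

Lemma cont_R_comp f g : cont_R f -> cont_R g -> cont_R (fun s => g (f s)).
Proof. intros Hf Hg x. apply continuous_comp; auto. Qed.

Lemma cont_R_plus f g : cont_R f -> cont_R g -> cont_R (fun s => f s + g s).
Proof. intros Hf Hg x. apply (continuous_plus f g); auto. Qed.

Lemma cont_R_minus f g : cont_R f -> cont_R g -> cont_R (fun s => f s - g s).
Proof. intros Hf Hg x. apply (continuous_minus f g); auto. Qed.

Lemma cont_R_scal k f : cont_R f -> cont_R (fun s => k * f s).
Proof. intros Hf x. apply (continuous_mult (fun _ => k) f); [apply continuous_const|auto]. Qed.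

Lemma cont_R_ln_comp f : cont_R f -> (forall s, 0 < f s) -> cont_R (fun s => ln (f s)).
Proof. intros Hf Hpos x. apply continuous_comp; [apply Hf|apply continuous_ln, Hpos]. Qed.

Lemma cont_R_shift h g : cont_R g -> cont_R (fun y => g (y + h)).
Proof.
  intros Hg. apply (cont_R_ext (fun y => g (1 * y + h))); [intros; f_equal; ring|].
  apply (cont_R_comp (fun y => 1 * y + h)); [apply cont_R_affine|auto].
Qed.

Lemma ex_RInt_cont_R g : cont_R g -> forall a b, ex_RInt g a b.
Proof. intros H a b. apply (@ex_RInt_continuous R_CompleteNormedModule). intros; apply H. Qed.

Lemma cont_R_bounded g a b : cont_R g -> a <= b ->
  exists B, forall s, a <= s <= b -> Rabs (g s) <= B.
Proof.
  intros Hc Hab.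
  destruct (continuity_ab_maj (fun s => Rabs (g s)) a b Hab) as [M [HM _]].
  - intros s _. apply continuity_pt_filterlim. apply continuous_Rabs_comp, Hc.
  - exists (Rabs (g M)). auto.
Qed.

Lemma unif_cont_interval (g : R -> R) : cont_R g ->
  forall a b eps, 0 < eps -> exists mu, 0 < mu /\
    forall x y, a <= x <= b -> a <= y <= b -> Rabs (x - y) <= mu -> Rabs (g x - g y) <= eps.
Proof.
  intros Hc a b eps He.
  destruct (@Heine_cor2 g a b) with (eps := mkposreal eps He) as [dl Hd].
  { intros x _. apply continuity_pt_filterlim. apply Hc. }
  exists (dl / 2). split; [destruct dl; simpl; lra|].
  intros x y Hx Hy Hxy. left. apply Hd; auto. destruct dl; simpl in *; lra.
Qed.

Fixpoint vec_of_Tn (n : nat) : Compactness.Tn n R -> nat -> R :=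
  match n with
  | O => fun _ _ => 0
  | S n' => fun t i => match i with O => fst t | S i' => vec_of_Tn n' (snd t) i' end
  end.

Fixpoint Tn_of_vec (n : nat) (x : nat -> R) : Compactness.Tn n R :=
  match n with
  | O => tt
  | S n' => (x O, Tn_of_vec n' (fun i => x (S i)))
  end.

Lemma vec_of_Tn_of_vec n x i : (i < n)%nat -> vec_of_Tn n (Tn_of_vec n x) i = x i.
Proof.
  revert x i. induction n; intros x i Hi; [lia|].
  destruct i; simpl; auto. rewrite IHn by lia. auto.
Qed.

Definition Tn_cube n : Compactness.Tn n R -> Prop :=
  bounded_n n (Tn_of_vec n (fun _ => 0)) (Tn_of_vec n (fun _ => 1)).

Lemma in_cube_vec_of_Tn n t : Tn_cube n t -> in_cube n (vec_of_Tn n t).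
Proof.
  unfold Tn_cube. revert t. induction n; intros t H i Hi; [lia|].
  destruct t as [t1 t2], H as [H1 H2].
  destruct i; simpl; auto. apply IHn; auto. lia.
Qed.

Lemma Tn_cube_of_vec n x : in_cube n x -> Tn_cube n (Tn_of_vec n x).
Proof.
  unfold Tn_cube. revert x. induction n; intros x H; simpl; auto.
  split; [apply H; lia|]. apply IHn. intros i Hi. apply H; lia.
Qed.

Lemma close_n_vec_of_Tn n e x t : close_n n e x t ->
  forall i, (i < n)%nat -> Rabs (vec_of_Tn n x i - vec_of_Tn n t i) < e.
Proof.
  revert x t. induction n; intros x t H i Hi; [lia|].
  destruct x as [x1 x2], t as [t1 t2], H as [H1 H2].
  destruct i; simpl; auto. apply IHn; auto. lia.
Qed.

(* A Lebesgue number for the gauge given by pointwise continuity, via Coquelicot's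
   [compactness_value] on [Tn d R]. *)
Lemma unif_cont_cube d f : cont_cube d f -> forall eps, 0 < eps -> exists dl, 0 < dl /\
  forall x y, in_cube d x -> in_cube d y ->
    (forall i, (i < d)%nat -> Rabs (x i - y i) < dl) -> Rabs (f x - f y) <= eps.
Proof.
  intros Hf eps He.
  assert (Hex : forall t, exists dl : posreal, in_cube d (vec_of_Tn d t) ->
    forall y, in_cube d y -> (forall i, (i < d)%nat -> Rabs (y i - vec_of_Tn d t i) < 2 * dl) ->
      Rabs (f y - f (vec_of_Tn d t)) < eps / 2).
  { intros t. destruct (classic (in_cube d (vec_of_Tn d t))) as [Hc|Hc].
    - destruct (Hf _ Hc (eps / 2)) as [dl [Hdl H]]; [lra|].
      exists (mkposreal (dl / 2) ltac:(lra)). intros _ y Hy Hyi. apply H; auto.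
      intros i Hi. specialize (Hyi i Hi). simpl in Hyi. lra.
    - exists (mkposreal 1 Rlt_0_1). contradiction. }
  apply choice in Hex as [delta Hdelta].
  destruct (compactness_value d (Tn_of_vec d (fun _ => 0)) (Tn_of_vec d (fun _ => 1)) delta)
    as [d0 Hd0].
  exists d0. split; [apply cond_pos|].
  intros x y Hx Hy Hxy. apply NNPP. intros Hneg.
  apply (Hd0 (Tn_of_vec d x) (Tn_cube_of_vec d x Hx)). intros (t & Ht & Hcl & Hle).
  apply Hneg.
  pose proof (cond_pos (delta t)).
  assert (Hxt : forall i, (i < d)%nat -> Rabs (x i - vec_of_Tn d t i) < delta t).
  { intros i Hi. pose proof (close_n_vec_of_Tn d _ _ _ Hcl i Hi) as Hc.
    rewrite vec_of_Tn_of_vec in Hc by auto. exact Hc. }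
  assert (H1 : Rabs (f x - f (vec_of_Tn d t)) < eps / 2).
  { apply Hdelta; auto using in_cube_vec_of_Tn. intros i Hi. specialize (Hxt i Hi). lra. }
  assert (H2 : Rabs (f y - f (vec_of_Tn d t)) < eps / 2).
  { apply Hdelta; auto using in_cube_vec_of_Tn. intros i Hi.
    specialize (Hxt i Hi). specialize (Hxy i Hi).
    replace (y i - vec_of_Tn d t i) with ((x i - vec_of_Tn d t i) - (x i - y i)) by ring.
    eapply Rle_lt_trans; [apply Rabs_triang|]. rewrite Rabs_Ropp. lra. }
  replace (f x - f y) with ((f x - f (vec_of_Tn d t)) - (f y - f (vec_of_Tn d t))) by ring.
  eapply Rle_trans; [apply Rabs_triang|]. rewrite Rabs_Ropp. lra.
Qed.

(** * Tent functions *)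

Definition tent (u : R) : R := (Rabs (u + 1) - 2 * Rabs u + Rabs (u - 1)) / 2.

Ltac tent_cases u :=
  unfold tent, Rabs; destruct (Rcase_abs u); destruct (Rcase_abs (u + 1));
  destruct (Rcase_abs (u - 1)).

Lemma tent_eq0 u : 1 <= Rabs u -> tent u = 0.
Proof. tent_cases u; intros; lra. Qed.

Lemma tent_eq u : Rabs u <= 1 -> tent u = 1 - Rabs u.
Proof. tent_cases u; intros; lra. Qed.

Lemma tent_range u : 0 <= tent u <= 1.
Proof. tent_cases u; lra. Qed.

Lemma tent_gt0_Rabs_lt1 u : 0 < tent u -> Rabs u < 1.
Proof. intros H. destruct (Rlt_le_dec (Rabs u) 1); auto. rewrite tent_eq0 in H; lra. Qed.

Lemma cont_R_tent : cont_R tent.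
Proof.
  assert (Habs : forall b, cont_R (fun u => Rabs (1 * u + b))).
  { intros b. apply (cont_R_comp (fun u => 1 * u + b)); [apply cont_R_affine|].
    intros x. apply continuous_Rabs. }
  apply (cont_R_ext (fun u => / 2 * (Rabs (1 * u + 1) - 2 * Rabs (1 * u + 0)
                                     + Rabs (1 * u + -1)))).
  { intros u. unfold tent. rewrite !Rmult_1_l, Rplus_0_r.
    replace (u + -1) with (u - 1) by ring. field. }
  apply cont_R_scal, cont_R_plus; [apply cont_R_minus; [|apply cont_R_scal]|]; apply Habs.
Qed.

Lemma tent_partition_unity N u : 0 <= u <= INR N ->
  rsum (fun j => tent (u - INR j)) 0 (S N) = 1.
Proof.
  revert u. induction N; intros u Hu.
  - simpl in *. assert (u = 0) by lra. subst.
    rewrite tent_eq; rewrite Rminus_0_r, Rabs_R0; lra.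
  - rewrite rsum_S_last. simpl (0 + S N)%nat. rewrite S_INR in Hu.
    destruct (Rle_dec u (INR N)) as [Hle|Hgt].
    + rewrite IHN by lra. rewrite tent_eq0 by (rewrite S_INR, Rabs_left1; lra). ring.
    + rewrite rsum_S_last. simpl (0 + N)%nat.
      rewrite (rsum_ext _ (fun _ => 0)), rsum_zero.
      2:{ intros j Hj. apply tent_eq0.
          assert (INR j + 1 <= INR N) by (rewrite <- S_INR; apply le_INR; lia).
          rewrite Rabs_right; lra. }
      rewrite S_INR, (tent_eq (u - INR N)), (tent_eq (u - (INR N + 1)))
        by (try rewrite Rabs_right by lra; try rewrite Rabs_left1 by lra; lra).
      rewrite Rabs_right, Rabs_left1 by lra. ring.
Qed.

Lemma Rmult_le_compat_l_when_pos (t a w : R) : 0 <= t -> (0 < t -> a <= w) -> t * a <= t * w.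
Proof. intros [Ht|<-] H; [apply Rmult_le_compat_l; auto; lra|lra]. Qed.

Lemma tent_interp_error N u (a : R) (f : nat -> R) w : 0 <= u <= INR N ->
  (forall j, (j <= N)%nat -> Rabs (u - INR j) < 1 -> Rabs (a - f j) <= w) ->
  Rabs (a - rsum (fun j => tent (u - INR j) * f j) 0 (S N)) <= w.
Proof.
  intros Hu H.
  replace a with (a * rsum (fun j => tent (u - INR j)) 0 (S N)) at 1
    by (rewrite tent_partition_unity; auto; ring).
  rewrite <- rsum_scal, <- rsum_minus. eapply Rle_trans; [apply Rabs_rsum|].
  replace w with (w * rsum (fun j => tent (u - INR j)) 0 (S N))
    by (rewrite tent_partition_unity; auto; ring).
  rewrite <- rsum_scal. apply rsum_le. intros j Hj.
  replace (a * tent (u - INR j) - tent (u - INR j) * f j) with (tent (u - INR j) * (a - f j))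
    by ring.
  destruct (tent_range (u - INR j)).
  rewrite Rabs_mult, (Rabs_right (tent _)), (Rmult_comm w) by lra.
  apply Rmult_le_compat_l_when_pos; auto. intros Ht. apply H; [lia|]. apply tent_gt0_Rabs_lt1; auto.
Qed.

(** * Tensor-product interpolation on the cube *)

Definition upd (c : nat -> nat) (m j : nat) : nat -> nat :=
  fun i => if Nat.eqb i m then j else c i.

(* [grid_sum N m F] sums [F c] over all [c : {0..N}^m]. *)
Fixpoint grid_sum (N m : nat) (F : (nat -> nat) -> R) : R :=
  match m with
  | O => F (fun _ => O)
  | S m' => rsum (fun j => grid_sum N m' (fun c => F (upd c m' j))) 0 (S N)
  end.

Fixpoint tent_prod (N : nat) (x : nat -> R) (m : nat) (c : nat -> nat) : R :=
  match m with
  | O => 1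
  | S m' => tent_prod N x m' c * tent (INR N * x m' - INR (c m'))
  end.

Definition grid_pt (N : nat) (c : nat -> nat) : nat -> R := fun i => INR (c i) / INR N.

Lemma grid_sum_ext N m F G : (forall c, F c = G c) -> grid_sum N m F = grid_sum N m G.
Proof.
  revert F G; induction m; intros F G H; cbn [grid_sum]; auto.
  apply rsum_ext. intros; apply IHm; auto.
Qed.

Lemma grid_sum_lin N m a F G :
  grid_sum N m (fun c => a * F c + G c) = a * grid_sum N m F + grid_sum N m G.
Proof.
  revert F G; induction m; intros F G; cbn [grid_sum]; auto.
  rewrite (rsum_ext _ (fun j => a * grid_sum N m (fun c => F (upd c m j))
                                + grid_sum N m (fun c => G (upd c m j)))) by (intros; apply IHm).
  rewrite rsum_plus, rsum_scal. auto.
Qed.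

Lemma grid_sum_zero N m : grid_sum N m (fun _ => 0) = 0.
Proof.
  induction m; cbn [grid_sum]; auto. rewrite (rsum_ext _ (fun _ => 0)) by auto. apply rsum_zero.
Qed.

Lemma grid_sum_scal N m a F : grid_sum N m (fun c => a * F c) = a * grid_sum N m F.
Proof.
  rewrite (grid_sum_ext N m _ (fun c => a * F c + 0)) by (intros; ring).
  rewrite grid_sum_lin, grid_sum_zero. ring.
Qed.

Lemma tent_prod_ext N x m c c' :
  (forall i, (i < m)%nat -> c i = c' i) -> tent_prod N x m c = tent_prod N x m c'.
Proof.
  induction m; intros H; simpl; auto.
  rewrite IHm by (intros; apply H; lia). rewrite H by lia. auto.
Qed.

Lemma tent_prod_upd N x m c j :
  tent_prod N x (S m) (upd c m j) = tent_prod N x m c * tent (INR N * x m - INR j).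
Proof.
  simpl. unfold upd at 2. rewrite Nat.eqb_refl. f_equal. apply tent_prod_ext.
  intros i Hi. unfold upd. destruct (Nat.eqb_spec i m); [lia|auto].
Qed.

Lemma grid_sum_tent_prod_S N x m H :
  grid_sum N (S m) (fun c => tent_prod N x (S m) c * H c) =
  rsum (fun j => tent (INR N * x m - INR j) *
                 grid_sum N m (fun c => tent_prod N x m c * H (upd c m j))) 0 (S N).
Proof.
  cbn [grid_sum]. apply rsum_ext. intros j _.
  rewrite <- grid_sum_scal. apply grid_sum_ext. intros c. rewrite tent_prod_upd. ring.
Qed.

Lemma scaled_coord_range N x i : in_cube (S i) x -> 0 <= INR N * x i <= INR N.
Proof.
  intros Hx. specialize (Hx i ltac:(lia)). pose proof (pos_INR N). nra.
Qed.

Lemma grid_sum_tent_prod N x m : in_cube m x -> grid_sum N m (tent_prod N x m) = 1.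
Proof.
  induction m; intros Hx; [reflexivity|].
  rewrite (grid_sum_ext N (S m) _ (fun c => tent_prod N x (S m) c * 1)) by (intros; ring).
  rewrite grid_sum_tent_prod_S.
  rewrite (rsum_ext _ (fun j => tent (INR N * x m - INR j))).
  - apply tent_partition_unity, scaled_coord_range; auto.
  - intros j _. rewrite (grid_sum_ext N m _ (tent_prod N x m)) by (intros; ring).
    rewrite IHm by (intros i Hi; apply Hx; lia). ring.
Qed.

Lemma Rabs_grid_sum_tent_prod_le N x m H w : in_cube m x ->
  (forall c, (forall i, (i < m)%nat -> Rabs (INR N * x i - INR (c i)) < 1) -> Rabs (H c) <= w) ->
  Rabs (grid_sum N m (fun c => tent_prod N x m c * H c)) <= w.
Proof.
  revert H; induction m; intros H Hx HH.
  - simpl. rewrite Rmult_1_l. apply HH. intros; lia.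
  - rewrite grid_sum_tent_prod_S.
    replace w with (w * rsum (fun j => tent (INR N * x m - INR j)) 0 (S N))
      by (rewrite tent_partition_unity by (apply scaled_coord_range; auto); ring).
    rewrite <- rsum_scal. eapply Rle_trans; [apply Rabs_rsum|]. apply rsum_le. intros j Hj.
    destruct (tent_range (INR N * x m - INR j)).
    rewrite Rabs_mult, (Rabs_right (tent _)), (Rmult_comm w) by lra.
    apply Rmult_le_compat_l_when_pos; auto. intros Ht.
    apply IHm; [intros i Hi; apply Hx; lia|].
    intros c Hc. apply HH. intros i Hi. unfold upd. destruct (Nat.eqb_spec i m) as [->|].
    + apply tent_gt0_Rabs_lt1; auto.
    + apply Hc. lia.
Qed.

Lemma grid_pt_close N x c i : (0 < N)%nat -> in_cube (S i) x ->
  Rabs (INR N * x i - INR (c i)) < 1 ->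
  0 <= grid_pt N c i <= 1 /\ Rabs (x i - grid_pt N c i) < / INR N.
Proof.
  intros HN Hx Hc.
  assert (HNr : 0 < INR N) by (apply lt_0_INR; lia).
  pose proof (scaled_coord_range N x i Hx).
  apply Rabs_def2 in Hc as [Ha Hb].
  assert (Hci : INR (c i) <= INR N).
  { assert (Hlt : INR (c i) < INR (S N)) by (rewrite S_INR; lra).
    apply INR_lt in Hlt. apply le_INR. lia. }
  unfold grid_pt. split; [split|].
  - apply Rmult_le_pos; [apply pos_INR|left; apply Rinv_0_lt_compat; auto].
  - apply Rle_div_l; lra.
  - replace (x i - INR (c i) / INR N) with ((INR N * x i - INR (c i)) / INR N) by (field; lra).
    rewrite Rabs_div, (Rabs_right (INR N)) by lra. unfold Rdiv.
    rewrite <- (Rmult_1_l (/ INR N)) at 2. apply Rmult_lt_compat_r.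
    + apply Rinv_0_lt_compat; auto.
    + apply Rabs_def1; lra.
Qed.

Lemma grid_interp_error d f N dl e : (0 < N)%nat -> / INR N < dl ->
  (forall x y, in_cube d x -> in_cube d y ->
     (forall i, (i < d)%nat -> Rabs (x i - y i) < dl) -> Rabs (f x - f y) <= e) ->
  forall x, in_cube d x ->
    Rabs (f x - grid_sum N d (fun c => f (grid_pt N c) * tent_prod N x d c)) <= e.
Proof.
  intros HN HNd Hu x Hx.
  replace (f x - grid_sum N d (fun c => f (grid_pt N c) * tent_prod N x d c)) with
    (grid_sum N d (fun c => tent_prod N x d c * (f x - f (grid_pt N c)))).
  2:{ rewrite (grid_sum_ext N d _ (fun c => f x * tent_prod N x d c
                                        + (-1 * (f (grid_pt N c) * tent_prod N x d c) + 0)))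
        by (intros; ring).
      rewrite !grid_sum_lin, grid_sum_zero, grid_sum_tent_prod; auto. ring. }
  apply Rabs_grid_sum_tent_prod_le; auto.
  intros c Hc.
  assert (Hpt : forall i, (i < d)%nat ->
            0 <= grid_pt N c i <= 1 /\ Rabs (x i - grid_pt N c i) < / INR N).
  { intros i Hi. apply grid_pt_close; auto. intros k Hk. apply Hx. lia. }
  apply Hu; auto; intros i Hi; destruct (Hpt i Hi); lra.
Qed.

Fixpoint tent_prod_shift (N : nat) (x : nat -> R) (m : nat) (c : nat -> nat) (eta : R) : R :=
  match m with
  | O => 1
  | S m' => tent_prod_shift N x m' c eta * (tent (INR N * x m' - INR (c m')) + eta)
  end.

Lemma exp_rsum_ln_tent N x m c eta : 0 < eta ->
  exp (rsum (fun i => ln (tent (INR N * x i - INR (c i)) + eta)) 0 m) = tent_prod_shift N x m c eta.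
Proof.
  intros He. induction m; [apply exp_0|].
  rewrite rsum_S_last, exp_plus, IHm, exp_ln; [reflexivity|].
  pose proof (tent_range (INR N * x (0 + m)%nat - INR (c (0 + m)%nat))). lra.
Qed.

Lemma tent_prod_shift_close N x m c eta : 0 <= eta <= 1 ->
  0 <= tent_prod N x m c <= 1 /\ tent_prod N x m c <= tent_prod_shift N x m c eta <= 2 ^ m /\
  tent_prod_shift N x m c eta - tent_prod N x m c <= eta * (2 ^ m - 1).
Proof.
  intros He. induction m as [|m [[H1 H2] [[H3 H4] H5]]]; simpl; [lra|].
  pose proof (tent_range (INR N * x m - INR (c m))).
  set (t := tent (INR N * x m - INR (c m))) in *.
  set (P := tent_prod N x m c) in *. set (Q := tent_prod_shift N x m c eta) in *.
  split; [split; nra|]. split; [split; nra|]. nra.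
Qed.

(** * Finite differences and iterated averages *)

Definition fdiff (h : R) (g : R -> R) : R -> R := fun y => g (y + h) - g y.

Fixpoint fdiff_n (h : R) (n : nat) (g : R -> R) : R -> R :=
  match n with O => g | S n' => fdiff h (fdiff_n h n' g) end.

Definition prim (g : R -> R) : R -> R := fun x => RInt g 0 x.

Fixpoint prim_n (n : nat) (g : R -> R) : R -> R :=
  match n with O => g | S n' => prim (prim_n n' g) end.

Definition avg (h : R) (g : R -> R) : R -> R := fdiff h (prim g).

Fixpoint avg_n (h : R) (n : nat) (g : R -> R) : R -> R :=
  match n with O => g | S n' => avg h (avg_n h n' g) end.

Lemma cont_R_prim g : cont_R g -> cont_R (prim g).
Proof.
  intros H x. apply (@ex_derive_continuous R_AbsRing R_NormedModule). exists (g x).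
  apply (@is_derive_RInt R_CompleteNormedModule g (prim g) 0 x); [|apply H].
  apply filter_forall. intros y. apply RInt_correct, ex_RInt_cont_R, H.
Qed.

Lemma cont_R_fdiff h g : cont_R g -> cont_R (fdiff h g).
Proof. intros H. apply cont_R_minus; [apply cont_R_shift|]; auto. Qed.

Lemma cont_R_fdiff_n h n g : cont_R g -> cont_R (fdiff_n h n g).
Proof. intros H; induction n; simpl; auto using cont_R_fdiff. Qed.

Lemma cont_R_prim_n n g : cont_R g -> cont_R (prim_n n g).
Proof. intros H; induction n; simpl; auto using cont_R_prim. Qed.

Lemma cont_R_avg_n h n g : cont_R g -> cont_R (avg_n h n g).
Proof. intros H; induction n; simpl; auto. apply cont_R_fdiff, cont_R_prim, IHn. Qed.

Lemma RInt_shift g h a b : cont_R g -> RInt (fun t => g (t + h)) a b = RInt g (a + h) (b + h).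
Proof.
  intros H.
  assert (E : RInt (fun y => scal 1 (g (1 * y + h))) a b = RInt g (1 * a + h) (1 * b + h)).
  { apply (@RInt_comp_lin R_CompleteNormedModule). rewrite !Rmult_1_l. apply ex_RInt_cont_R, H. }
  rewrite !Rmult_1_l in E. rewrite <- E. apply RInt_ext. intros x _.
  rewrite !Rmult_1_l. reflexivity.
Qed.

Lemma RInt_Chasles_cont_R g a b c : cont_R g -> RInt g a b + RInt g b c = RInt g a c.
Proof. intros H. apply (RInt_Chasles g a b c); apply ex_RInt_cont_R; auto. Qed.

Lemma RInt_minus_cont_R f g a b : cont_R f -> cont_R g ->
  RInt (fun x => f x - g x) a b = RInt f a b - RInt g a b.
Proof. intros Hf Hg. apply (RInt_minus f g a b); apply ex_RInt_cont_R; auto. Qed.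

Lemma prim_fdiff u h : cont_R u -> forall x, prim (fdiff h u) x = fdiff h (prim u) x - prim u h.
Proof.
  intros H x. unfold prim, fdiff.
  rewrite RInt_minus_cont_R, RInt_shift, Rplus_0_l by auto using cont_R_shift.
  rewrite <- (RInt_Chasles_cont_R u 0 h (x + h)) by auto. ring.
Qed.

Lemma fdiff_shift_invariant h f g c :
  (forall x, f x = g x - c) -> forall y, fdiff h f y = fdiff h g y.
Proof. intros H y. unfold fdiff. rewrite !H. ring. Qed.

Lemma prim_fdiff_n u h n : cont_R u ->
  exists c, forall x, prim (fdiff_n h n u) x = fdiff_n h n (prim u) x - c.
Proof.
  intros H. induction n as [|n [c Hc]].
  - exists 0. intros; simpl; ring.
  - exists (prim (fdiff_n h n u) h). intros x. simpl.
    rewrite prim_fdiff by (apply cont_R_fdiff_n; auto). f_equal.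
    apply (fdiff_shift_invariant h _ _ c). auto.
Qed.

(* Integration commutes with differencing up to an additive constant, which the
   next difference kills. *)
Lemma avg_n_eq h n u : cont_R u -> avg_n h n u = fdiff_n h n (prim_n n u).
Proof.
  intros H. induction n; simpl; auto. rewrite IHn. extensionality x. unfold avg.
  destruct (prim_fdiff_n (prim_n n u) h n (cont_R_prim_n n u H)) as [c Hc].
  apply (fdiff_shift_invariant h _ _ c). auto.
Qed.

Lemma fdiff_comm a b g : fdiff a (fdiff b g) = fdiff b (fdiff a g).
Proof. extensionality y. unfold fdiff. replace (y + a + b) with (y + b + a) by ring. ring. Qed.

Lemma fdiff_n_fdiff_comm a b n g : fdiff_n a n (fdiff b g) = fdiff b (fdiff_n a n g).
Proof. induction n; simpl; auto. rewrite IHn. apply fdiff_comm. Qed.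

Lemma fdiff_n_comm a b n m g : fdiff_n a n (fdiff_n b m g) = fdiff_n b m (fdiff_n a n g).
Proof. induction m; simpl; auto. rewrite fdiff_n_fdiff_comm, IHm. auto. Qed.

Lemma fdiff_n_minus h n f g y :
  fdiff_n h n (fun t => f t - g t) y = fdiff_n h n f y - fdiff_n h n g y.
Proof. revert y. induction n; intros y; simpl; auto. unfold fdiff. rewrite !IHn. ring. Qed.

Lemma fdiff_n_scal h n k f y : fdiff_n h n (fun t => k * f t) y = k * fdiff_n h n f y.
Proof. revert y. induction n; intros y; simpl; auto. unfold fdiff. rewrite !IHn. ring. Qed.

Lemma Rabs_fdiff_n_le h n g B y : 0 <= h ->
  (forall t, y <= t <= y + INR n * h -> Rabs (g t) <= B) -> Rabs (fdiff_n h n g y) <= 2 ^ n * B.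
Proof.
  revert y. induction n; intros y Hh H; simpl.
  - rewrite Rmult_1_l. apply H. simpl. lra.
  - unfold fdiff. eapply Rle_trans; [apply Rabs_triang|]. rewrite Rabs_Ropp.
    rewrite S_INR in H. pose proof (pos_INR n).
    assert (Rabs (fdiff_n h n g (y + h)) <= 2 ^ n * B) by (apply IHn; auto; intros; apply H; nra).
    assert (Rabs (fdiff_n h n g y) <= 2 ^ n * B) by (apply IHn; auto; intros; apply H; nra).
    lra.
Qed.

Lemma avg_eq h g y : cont_R g -> avg h g y = RInt g y (y + h).
Proof.
  intros H. unfold avg, fdiff, prim. rewrite <- (RInt_Chasles_cont_R g 0 y (y + h)) by auto. ring.
Qed.

Lemma RInt_between g a b m M : cont_R g -> a <= b -> (forall t, a <= t <= b -> m <= g t <= M) ->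
  (b - a) * m <= RInt g a b <= (b - a) * M.
Proof.
  intros Hc Hab H.
  assert (Ec : forall c, RInt (fun _ => c) a b = (b - a) * c)
    by (intros c; rewrite RInt_const; reflexivity).
  rewrite <- !Ec. split; apply RInt_le; auto using ex_RInt_const, ex_RInt_cont_R;
    intros x Hx; apply H; lra.
Qed.

Lemma avg_n_between dl n u y m M : cont_R u -> 0 < dl ->
  (forall t, y <= t <= y + INR n * dl -> m <= u t <= M) ->
  dl ^ n * m <= avg_n dl n u y <= dl ^ n * M.
Proof.
  revert y. induction n; intros y Hc Hdl H; simpl.
  - rewrite !Rmult_1_l. apply H. simpl; lra.
  - rewrite avg_eq by (apply cont_R_avg_n; auto).
    assert (HB := RInt_between (avg_n dl n u) y (y + dl) (dl ^ n * m) (dl ^ n * M)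
                    (cont_R_avg_n dl n u Hc) ltac:(lra)).
    replace (y + dl - y) with dl in HB by ring. rewrite !Rmult_assoc. apply HB.
    intros t Ht. apply IHn; auto. intros t' Ht'. apply H.
    rewrite S_INR. pose proof (pos_INR n). nra.
Qed.

Lemma riemann_sum_error u eta N y w : cont_R u -> 0 <= eta ->
  (forall j, (j < N)%nat -> forall t, y + INR j * eta <= t <= y + INR j * eta + eta ->
     Rabs (u t - u (y + INR j * eta)) <= w) ->
  Rabs (RInt u y (y + INR N * eta) - eta * rsum (fun j => u (y + INR j * eta)) 0 N)
    <= INR N * eta * w.
Proof.
  intros Hc He. induction N; intros H.
  - simpl. rewrite Rmult_0_l, Rplus_0_r.
    replace (RInt u y y) with 0 by (rewrite RInt_point; reflexivity).
    rewrite Rmult_0_r, Rminus_0_r, Rabs_R0. lra.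
  - rewrite rsum_S_last. simpl (0 + N)%nat. set (a := y + INR N * eta).
    replace (y + INR (S N) * eta) with (a + eta) by (unfold a; rewrite S_INR; ring).
    rewrite <- (RInt_Chasles_cont_R u y a (a + eta)) by auto.
    assert (IH := IHN ltac:(intros j Hj; apply H; lia)).
    assert (Hp : Rabs (RInt u a (a + eta) - eta * u a) <= eta * w).
    { replace (eta * u a) with (RInt (fun _ => u a) a (a + eta))
        by (rewrite RInt_const; unfold scal; simpl; unfold mult; simpl; ring).
      rewrite <- RInt_minus_cont_R by auto using cont_R_const.
      replace (eta * w) with ((a + eta - a) * w) by ring.
      apply abs_RInt_le_const; [lra| |].
      - apply ex_RInt_cont_R, cont_R_minus; auto using cont_R_const.
      - intros t Ht. apply H; [lia|]. unfold a in Ht. lra. }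
    rewrite S_INR.
    replace (RInt u y a + RInt u a (a + eta)
             - eta * (rsum (fun j => u (y + INR j * eta)) 0 N + u a))
      with ((RInt u y a - eta * rsum (fun j => u (y + INR j * eta)) 0 N)
            + (RInt u a (a + eta) - eta * u a)) by ring.
    eapply Rle_trans; [apply Rabs_triang|]. unfold a in *. lra.
Qed.

Lemma bounded_fdiff_n_zero_const h n y0 : forall g B, (forall y, Rabs (g y) <= B) ->
  (forall m : nat, fdiff_n h n g (y0 + INR m * h) = 0) ->
  forall m : nat, g (y0 + INR m * h) = g y0.
Proof.
  induction n; intros g B HB Hz m.
  - simpl in Hz. rewrite Hz. specialize (Hz 0%nat). simpl in Hz.
    rewrite Rmult_0_l, Rplus_0_r in Hz. auto.
  - assert (HB2 : forall y, Rabs (fdiff h g y) <= 2 * B).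
    { intros y. unfold fdiff. eapply Rle_trans; [apply Rabs_triang|]. rewrite Rabs_Ropp.
      pose proof (HB (y + h)). pose proof (HB y). lra. }
    assert (Hc := IHn (fdiff h g) (2 * B) HB2).
    assert (Hz' : forall m : nat, fdiff_n h n (fdiff h g) (y0 + INR m * h) = 0).
    { intros m'. rewrite fdiff_n_fdiff_comm. apply Hz. }
    specialize (Hc Hz'). set (c := fdiff h g y0) in *.
    assert (Hlin : forall k : nat, g (y0 + INR k * h) = g y0 + INR k * c).
    { intros k. induction k as [|k IHk].
      - simpl. rewrite Rmult_0_l, Rplus_0_r. ring.
      - specialize (Hc k). unfold fdiff in Hc.
        replace (y0 + INR (S k) * h) with (y0 + INR k * h + h) by (rewrite S_INR; ring).
        rewrite S_INR. lra. }
    destruct (Req_dec c 0) as [Hc0|Hc0]; [rewrite Hlin, Hc0; ring|exfalso].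
    destruct (INR_archimed (Rabs c) (2 * Rabs B + 1)) as [N HN]; [apply Rabs_pos_lt; auto|].
    assert (H1 := HB (y0 + INR N * h)). assert (H2 := HB y0). rewrite Hlin in H1.
    assert (HNc : Rabs (INR N * c) <= 2 * Rabs B).
    { replace (INR N * c) with ((g y0 + INR N * c) - g y0) by ring.
      eapply Rle_trans; [apply Rabs_triang|]. rewrite Rabs_Ropp. pose proof (Rle_abs B). lra. }
    rewrite Rabs_mult, Rabs_right in HNc by (apply Rle_ge, pos_INR). lra.
Qed.

(** * Polynomial approximation of the absolute value *)

(* A polynomial is a list of (coefficient, exponent) pairs. *)
Fixpoint poly_eval (l : list (R * nat)) (s : R) : R :=
  match l with nil => 0 | (c, k) :: l' => c * s ^ k + poly_eval l' s end.

Definition poly_mul (l1 l2 : list (R * nat)) : list (R * nat) :=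
  flat_map (fun '(c, k) => map (fun '(c', k') => (c * c', (k + k')%nat)) l2) l1.

Lemma poly_eval_app l1 l2 s : poly_eval (l1 ++ l2) s = poly_eval l1 s + poly_eval l2 s.
Proof. induction l1 as [|[c k] l IH]; simpl; [ring|]. rewrite IH; ring. Qed.

Lemma poly_eval_mul l1 l2 s : poly_eval (poly_mul l1 l2) s = poly_eval l1 s * poly_eval l2 s.
Proof.
  assert (Hmon : forall c k, poly_eval (map (fun '(c', k') => (c * c', (k + k')%nat)) l2) s
                             = c * s ^ k * poly_eval l2 s).
  { intros c k. induction l2 as [|[c' k'] l IH]; simpl; [ring|]. rewrite IH, pow_add; ring. }
  induction l1 as [|[c k] l IH]; simpl; [ring|]. unfold poly_mul in *. simpl.
  rewrite poly_eval_app, Hmon, IH. ring.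
Qed.

Fixpoint abs_approx (n : nat) (s : R) : R :=
  match n with O => 0 | S n' => abs_approx n' s + (s ^ 2 - abs_approx n' s ^ 2) / 2 end.

Lemma abs_approx_poly n : exists l, forall s, abs_approx n s = poly_eval l s.
Proof.
  induction n as [|n [l Hl]]; [exists nil; intros; simpl; auto|].
  exists (l ++ ((1/2, 2%nat) :: nil) ++ poly_mul ((-1/2, 0%nat) :: nil) (poly_mul l l)).
  intros s. cbn [abs_approx]. rewrite !poly_eval_app, !poly_eval_mul, Hl. simpl. field.
Qed.

Lemma abs_approx_bounds n s : Rabs s <= 1 ->
  0 <= abs_approx n s <= Rabs s /\ Rabs s - abs_approx n s <= Rabs s * (1 - Rabs s / 2) ^ n.
Proof.
  intros Hs.
  assert (E2 : s ^ 2 = Rabs s * Rabs s).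
  { rewrite <- Rabs_mult, Rabs_right; [ring|]. apply Rle_ge, Rle_0_sqr. }
  assert (Ha := Rabs_pos s).
  induction n as [|n [[H0 H1] H2]]; [simpl; lra|].
  (* |s| - q' = (|s| - q) (1 - (|s| + q) / 2) *)
  cbn [abs_approx]. rewrite E2. set (q := abs_approx n s) in *. set (a := Rabs s) in *.
  assert (0 <= (1 - a / 2) ^ n) by (apply pow_le; lra).
  simpl. split; [split; nra|].
  replace (a - (q + (a * a - q * (q * 1)) / 2)) with ((a - q) * (1 - (a + q) / 2)) by field.
  apply Rle_trans with ((a * (1 - a / 2) ^ n) * (1 - a / 2)); [apply Rmult_le_compat; lra|].
  right. ring.
Qed.

Lemma abs_approx_unif eps : 0 < eps ->
  exists n, forall s, Rabs s <= 1 -> Rabs (Rabs s - abs_approx n s) <= eps.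
Proof.
  intros He. set (e := Rmin eps 1).
  assert (He1 : 0 < e <= 1) by (unfold e; split; [apply Rmin_glb_lt; lra|apply Rmin_r]).
  assert (Hee : e <= eps) by apply Rmin_l.
  destruct (pow_lt_1_zero (1 - e / 2) ltac:(rewrite Rabs_right; lra) e ltac:(lra)) as [N HN].
  exists N. intros s Hs. destruct (abs_approx_bounds N s Hs) as [[H0 H1] H2].
  rewrite Rabs_right by lra.
  destruct (Rle_dec (Rabs s) e); [lra|].
  specialize (HN N (le_n N)). rewrite Rabs_right in HN by (apply Rle_ge, pow_le; lra).
  assert ((1 - Rabs s / 2) ^ N <= (1 - e / 2) ^ N) by (apply pow_incr; lra).
  assert (0 <= (1 - Rabs s / 2) ^ N) by (apply pow_le; lra).
  assert (Rabs s * (1 - Rabs s / 2) ^ N <= 1 * (1 - e / 2) ^ N)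
    by (apply Rmult_le_compat; lra).
  lra.
Qed.

Ltac case_nat :=
  repeat match goal with
  | |- context [Nat.ltb ?a ?b] => destruct (Nat.ltb_spec a b)
  | |- context [Nat.eqb ?a ?b] => destruct (Nat.eqb_spec a b)
  end; try lia.

Section Activation.

Variable sigma : R -> R.
Hypothesis sigma_range : forall t, 0 <= sigma t <= 1.
Hypothesis sigma_cont : cont_R sigma.
Variables x0 D : R.
Hypothesis sigma_derive : is_derive sigma x0 D.
Hypothesis D_neq0 : D <> 0.

(** * Linearisation of the activation *)

Lemma sigma_taylor1 th : 0 < th -> exists rho, 0 < rho /\ forall h, Rabs h <= rho ->
  Rabs (sigma (x0 + h) - sigma x0 - D * h) <= th * Rabs h.
Proof.
  intros Hth. apply is_derive_Reals in sigma_derive as HD.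
  destruct (HD th Hth) as [dl Hdl].
  exists (dl / 2). split; [destruct dl; simpl; lra|].
  intros h Hh. destruct (Req_dec h 0) as [->|Hn].
  - rewrite Rplus_0_r, Rabs_R0, Rmult_0_r, Rminus_diag, Rminus_0_r, Rabs_R0. lra.
  - assert (Habs : Rabs h < dl) by (destruct dl; simpl in *; lra).
    specialize (Hdl h Hn Habs).
    replace (sigma (x0 + h) - sigma x0 - D * h) with (((sigma (x0 + h) - sigma x0) / h - D) * h)
      by (field; auto).
    rewrite Rabs_mult. apply Rmult_le_compat_r; [apply Rabs_pos|lra].
Qed.

(* A sigma-unit with a small input scale [dl] read off affinely: almost the identity. *)
Definition lin_unit (dl z : R) : R := (sigma (x0 + dl * z) - sigma x0) / (dl * D).

Lemma lin_unit_close K eps : 0 <= K -> 0 < eps -> exists dl, 0 < dl <= 1 /\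
  forall z, Rabs z <= K -> Rabs (lin_unit dl z - z) <= eps.
Proof.
  intros HK He. assert (HaD : 0 < Rabs D) by (apply Rabs_pos_lt; auto).
  assert (Hth : 0 < eps * Rabs D / (K + 1))
    by (apply Rdiv_lt_0_compat; [apply Rmult_lt_0_compat|]; lra).
  destruct (sigma_taylor1 _ Hth) as [rho [Hrho Hr]].
  set (dl := Rmin 1 (rho / (K + 1))).
  assert (Hdl : 0 < dl <= 1).
  { split; [apply Rmin_glb_lt; [lra|apply Rdiv_lt_0_compat; lra]|apply Rmin_l]. }
  assert (Hdlr : dl * (K + 1) <= rho).
  { apply Rle_trans with (rho / (K + 1) * (K + 1)); [|right; field; lra].
    apply Rmult_le_compat_r; [lra|apply Rmin_r]. }
  exists dl. split; auto. intros z Hz.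
  assert (Hdz : Rabs (dl * z) <= dl * K) by (rewrite Rabs_mult, Rabs_right by lra; nra).
  specialize (Hr (dl * z) ltac:(nra)).
  unfold lin_unit.
  replace ((sigma (x0 + dl * z) - sigma x0) / (dl * D) - z)
    with ((sigma (x0 + dl * z) - sigma x0 - D * (dl * z)) / (dl * D)) by (field; lra).
  rewrite Rabs_div, Rabs_mult, (Rabs_right dl) by (try apply Rmult_integral_contrapositive; lra).
  apply Rle_div_l; [nra|].
  apply Rle_trans with (eps * Rabs D / (K + 1) * (dl * K)); [nra|].
  apply Rle_trans with (eps * Rabs D * dl * (K / (K + 1))); [right; field; lra|].
  replace (eps * (dl * Rabs D)) with (eps * Rabs D * dl * 1) by ring.
  apply Rmult_le_compat_l; [left; repeat apply Rmult_lt_0_compat; lra|]. apply Rle_div_l; lra.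
Qed.

Lemma lin_unit_stable K eps : 0 <= K -> 0 < eps -> exists dl mu, 0 < dl <= 1 /\ 0 < mu /\
  forall z z', Rabs z <= K -> Rabs (z' - z) <= mu -> Rabs (lin_unit dl z' - z) <= eps.
Proof.
  intros HK He. assert (HaD : 0 < Rabs D) by (apply Rabs_pos_lt; auto).
  destruct (lin_unit_close K (eps / 2) HK ltac:(lra)) as [dl [Hdl Hclose]].
  destruct (unif_cont_interval sigma sigma_cont (x0 - K - 1) (x0 + K + 1) (eps * dl * Rabs D / 2))
    as [mu [Hmu Hu]]; [apply Rdiv_lt_0_compat; [repeat apply Rmult_lt_0_compat|]; lra|].
  exists dl, (Rmin 1 mu). split; auto. split; [apply Rmin_glb_lt; lra|].
  intros z z' Hz Hzz.
  assert (H1 := Rmin_l 1 mu). assert (H2 := Rmin_r 1 mu).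
  apply Rabs_le_between in Hz as Hz'.
  assert (Hz'' : Rabs z' <= K + 1).
  { replace z' with (z + (z' - z)) by ring. eapply Rle_trans; [apply Rabs_triang|lra]. }
  apply Rabs_le_between in Hz''.
  assert (Hs : Rabs (sigma (x0 + dl * z') - sigma (x0 + dl * z)) <= eps * dl * Rabs D / 2).
  { apply Hu; try split; try nra.
    replace (x0 + dl * z' - (x0 + dl * z)) with (dl * (z' - z)) by ring.
    rewrite Rabs_mult, Rabs_right by lra. nra. }
  replace (lin_unit dl z' - z) with
    ((sigma (x0 + dl * z') - sigma (x0 + dl * z)) / (dl * D) + (lin_unit dl z - z))
    by (unfold lin_unit; field; lra).
  eapply Rle_trans; [apply Rabs_triang|].
  specialize (Hclose z Hz).
  assert (Rabs ((sigma (x0 + dl * z') - sigma (x0 + dl * z)) / (dl * D)) <= eps / 2); [|lra].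
  rewrite Rabs_div, Rabs_mult, (Rabs_right dl) by (try apply Rmult_integral_contrapositive; lra).
  apply Rle_div_l; [nra|]. lra.
Qed.

(** * Shallow networks *)

Fixpoint shallow (l : list (R * R * R)) (s : R) : R :=
  match l with
  | nil => 0
  | (c, al, be) :: l' => c * sigma (al * s + be) + shallow l' s
  end.

Fixpoint shallow_weight (l : list (R * R * R)) : R :=
  match l with
  | nil => 0
  | (c, _, _) :: l' => Rabs c + shallow_weight l'
  end.

Lemma Rabs_shallow_le l s : Rabs (shallow l s) <= shallow_weight l.
Proof.
  induction l as [|[[c al] be] l IH]; simpl; [rewrite Rabs_R0; lra|].
  eapply Rle_trans; [apply Rabs_triang|]. rewrite Rabs_mult.
  specialize (sigma_range (al * s + be)). rewrite (Rabs_right (sigma _)) by lra.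
  pose proof (Rabs_pos c). nra.
Qed.

Lemma cont_R_shallow c0 l : cont_R (fun s => c0 + shallow l s).
Proof.
  apply cont_R_plus; [apply cont_R_const|].
  induction l as [|[[c a] b] l IH]; simpl; [apply cont_R_const|].
  apply cont_R_plus; auto. apply cont_R_scal, cont_R_comp; auto using cont_R_affine.
Qed.

Lemma shallow_app l1 l2 s : shallow (l1 ++ l2) s = shallow l1 s + shallow l2 s.
Proof. induction l1 as [|[[c a] b] l IH]; simpl; [ring|]. rewrite IH; ring. Qed.

Definition shallow_scal (k : R) (l : list (R * R * R)) := map (fun '(c, a, b) => (k * c, a, b)) l.

Lemma shallow_scalE k l s : shallow (shallow_scal k l) s = k * shallow l s.
Proof. induction l as [|[[c a] b] l IH]; simpl; [ring|]. rewrite IH; ring. Qed.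

Definition shallow_affine (al be : R) (l : list (R * R * R)) :=
  map (fun '(c, a, b) => (c, a * al, a * be + b)) l.

Lemma shallow_affineE al be l s : shallow (shallow_affine al be l) s = shallow l (al * s + be).
Proof.
  induction l as [|[[c a] b] l IH]; simpl; [ring|]. rewrite IH. do 3 f_equal. ring.
Qed.

Definition shallow_approx_on (r : R) (phi : R -> R) : Prop :=
  forall eps, 0 < eps -> exists l c0, forall s, Rabs s <= r ->
    Rabs (phi s - (c0 + shallow l s)) <= eps.

Definition shallow_approx (phi : R -> R) : Prop := forall r, shallow_approx_on r phi.

Lemma shallow_approx_on_ext phi psi r :
  (forall s, Rabs s <= r -> phi s = psi s) -> shallow_approx_on r psi -> shallow_approx_on r phi.
Proof.
  intros He H eps Hp. destruct (H eps Hp) as (l & c0 & Hl).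
  exists l, c0. intros s Hs. rewrite He; auto.
Qed.

Lemma shallow_approx_on_lim phi r :
  (forall eps, 0 < eps -> exists psi, shallow_approx_on r psi /\
     forall s, Rabs s <= r -> Rabs (phi s - psi s) <= eps) -> shallow_approx_on r phi.
Proof.
  intros H eps Hp. destruct (H (eps / 2)) as (psi & Hpsi & Hc); [lra|].
  destruct (Hpsi (eps / 2)) as (l & c0 & Hl); [lra|]. exists l, c0. intros s Hs.
  replace (phi s - (c0 + shallow l s))
    with ((phi s - psi s) + (psi s - (c0 + shallow l s))) by ring.
  eapply Rle_trans; [apply Rabs_triang|]. specialize (Hc s Hs). specialize (Hl s Hs). lra.
Qed.

Lemma shallow_approx_on_le phi r1 r2 :
  r1 <= r2 -> shallow_approx_on r2 phi -> shallow_approx_on r1 phi.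
Proof.
  intros Hle H eps Hp. destruct (H eps Hp) as (l & c & Hl). exists l, c. intros s Hs. apply Hl; lra.
Qed.

Lemma shallow_approx_on_plus f g r :
  shallow_approx_on r f -> shallow_approx_on r g -> shallow_approx_on r (fun s => f s + g s).
Proof.
  intros Hf Hg eps Hp.
  destruct (Hf (eps / 2)) as (l1 & c1 & H1); [lra|].
  destruct (Hg (eps / 2)) as (l2 & c2 & H2); [lra|].
  exists (l1 ++ l2), (c1 + c2). intros s Hs. rewrite shallow_app.
  specialize (H1 s Hs); specialize (H2 s Hs).
  replace (f s + g s - (c1 + c2 + (shallow l1 s + shallow l2 s))) with
    ((f s - (c1 + shallow l1 s)) + (g s - (c2 + shallow l2 s))) by ring.
  eapply Rle_trans; [apply Rabs_triang|lra].
Qed.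

Lemma shallow_approx_on_scal k f r :
  shallow_approx_on r f -> shallow_approx_on r (fun s => k * f s).
Proof.
  intros Hf eps Hp. pose proof (Rabs_pos k) as Hk.
  destruct (Hf (eps / (Rabs k + 1))) as (l & c & H); [apply Rdiv_lt_0_compat; lra|].
  exists (shallow_scal k l), (k * c). intros s Hs. rewrite shallow_scalE.
  replace (k * f s - (k * c + k * shallow l s)) with (k * (f s - (c + shallow l s))) by ring.
  rewrite Rabs_mult. specialize (H s Hs).
  apply Rle_trans with ((Rabs k + 1) * (eps / (Rabs k + 1))); [|right; field; lra].
  pose proof (Rabs_pos (f s - (c + shallow l s))). nra.
Qed.

Lemma shallow_approx_on_minus f g r :
  shallow_approx_on r f -> shallow_approx_on r g -> shallow_approx_on r (fun s => f s - g s).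
Proof.
  intros Hf Hg. eapply shallow_approx_on_ext;
    [|apply (shallow_approx_on_plus _ _ _ Hf (shallow_approx_on_scal (-1) _ _ Hg))].
  intros; simpl; ring.
Qed.

Lemma shallow_approx_on_const c r : shallow_approx_on r (fun _ => c).
Proof.
  intros eps Hp. exists nil, c. intros; simpl.
  rewrite Rplus_0_r, Rminus_diag, Rabs_R0; lra.
Qed.

Lemma shallow_approx_on_unit al be r : shallow_approx_on r (fun s => sigma (al * s + be)).
Proof.
  intros eps Hp. exists ((1, al, be) :: nil), 0. intros; simpl.
  rewrite Rplus_0_l, Rplus_0_r, Rmult_1_l, Rminus_diag, Rabs_R0. lra.
Qed.

Lemma shallow_approx_on_affine f al be r :
  shallow_approx_on (Rabs al * r + Rabs be) f -> shallow_approx_on r (fun s => f (al * s + be)).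
Proof.
  intros H eps Hp. destruct (H eps Hp) as (l & c & Hl). exists (shallow_affine al be l), c.
  intros s Hs. rewrite shallow_affineE. apply Hl.
  eapply Rle_trans; [apply Rabs_triang|]. rewrite Rabs_mult.
  pose proof (Rabs_pos al). apply Rplus_le_compat_r, Rmult_le_compat_l; auto.
Qed.

Lemma shallow_approx_affine f al be : shallow_approx f -> shallow_approx (fun s => f (al * s + be)).
Proof. intros H r. apply shallow_approx_on_affine, H. Qed.

Lemma shallow_approx_on_rsum (f : nat -> R -> R) m n r :
  (forall i, shallow_approx_on r (f i)) -> shallow_approx_on r (fun s => rsum (fun i => f i s) m n).
Proof.
  intros H. revert m. induction n; intros m; simpl.
  - apply shallow_approx_on_const.
  - apply shallow_approx_on_plus; auto.
Qed.

Lemma shallow_approx_sigma : shallow_approx sigma.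
Proof.
  intros r. eapply shallow_approx_on_ext; [|apply (shallow_approx_on_unit 1 0)].
  intros; simpl; f_equal; ring.
Qed.

(** * Density of shallow networks *)

(* The average is a uniform limit of Riemann sums [eta * sum_j u (s + j eta)]. *)
Lemma shallow_approx_avg h u : 0 < h -> cont_R u -> shallow_approx u -> shallow_approx (avg h u).
Proof.
  intros Hh Hc HN r. apply shallow_approx_on_le with (Rabs r); [apply Rle_abs|].
  set (Q := Rabs r). assert (HQ : 0 <= Q) by apply Rabs_pos.
  apply shallow_approx_on_lim. intros eps He.
  destruct (unif_cont_interval u Hc (- Q - 1) (Q + h + 1) (eps / (2 * h))) as [mu [Hmu Hu]].
  { apply Rdiv_lt_0_compat; lra. }
  destruct (INR_archimed mu h Hmu) as [N HN'].
  assert (HNr : 0 < INR N) by (destruct N; simpl in HN'; [lra|apply lt_0_INR; lia]).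
  set (eta := h / INR N).
  assert (Heta : 0 < eta) by (apply Rdiv_lt_0_compat; lra).
  assert (Hetamu : eta <= mu) by (apply Rle_div_l; lra).
  assert (HNeta : INR N * eta = h) by (unfold eta; field; lra).
  exists (fun s => eta * rsum (fun j => u (1 * s + INR j * eta)) 0 N). split.
  - apply shallow_approx_on_scal, shallow_approx_on_rsum. intros j.
    apply shallow_approx_on_affine, HN.
  - intros s Hs. apply Rabs_le_between in Hs.
    rewrite avg_eq by auto. rewrite <- HNeta at 1.
    rewrite (rsum_ext _ (fun j => u (s + INR j * eta))) by (intros; rewrite Rmult_1_l; auto).
    assert (Hosc : forall j, (j < N)%nat ->
              forall t, s + INR j * eta <= t <= s + INR j * eta + eta ->
              Rabs (u t - u (s + INR j * eta)) <= eps / (2 * h)).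
    { intros j Hj t Ht.
      assert (INR j * eta + eta <= h).
      { rewrite <- HNeta.
        replace (INR j * eta + eta) with (INR (S j) * eta) by (rewrite S_INR; ring).
        apply Rmult_le_compat_r; [lra|]. apply le_INR; lia. }
      assert (0 <= INR j * eta) by (apply Rmult_le_pos; [apply pos_INR|lra]).
      apply Hu; try split; try lra. rewrite Rabs_right; lra. }
    eapply Rle_trans; [apply riemann_sum_error; auto; lra|].
    rewrite HNeta. apply Rle_trans with (eps / 2); [right; field|]; lra.
Qed.

Lemma shallow_approx_avg_n h n : 0 < h -> shallow_approx (avg_n h n sigma).
Proof.
  intros Hh. induction n; simpl; [apply shallow_approx_sigma|].
  apply shallow_approx_avg; auto. apply cont_R_avg_n, sigma_cont.
Qed.

Lemma shallow_approx_fdiff_n_scaled n G : shallow_approx G ->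
  forall a c b, shallow_approx (fun s => fdiff_n (a * s) n G (c * s + b)).
Proof.
  induction n; intros HN a c b; simpl; [apply shallow_approx_affine; auto|].
  intros r. unfold fdiff. apply shallow_approx_on_minus; [|apply IHn; auto].
  eapply shallow_approx_on_ext; [|apply (IHn HN a (c + a) b)].
  intros s _. cbv beta. f_equal. ring.
Qed.

(* Otherwise the bounded sigma would be constant on x0 + rho N, although
   sigma (x0 + rho) - sigma x0 is close to D rho. *)
Lemma exists_fdiff_n_neq0 : exists h, 0 < h /\ forall n, exists b, fdiff_n h n sigma b <> 0.
Proof.
  assert (HaD : 0 < Rabs D) by (apply Rabs_pos_lt; auto).
  destruct (sigma_taylor1 (Rabs D / 2)) as [rho [Hrho Hr]]; [lra|].
  exists rho. split; auto. intros n.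
  destruct (classic (exists m : nat, fdiff_n rho n sigma (x0 + INR m * rho) <> 0))
    as [[m Hm]|Hno]; [eauto|exfalso].
  assert (Hz : forall m : nat, fdiff_n rho n sigma (x0 + INR m * rho) = 0).
  { intros m. apply NNPP. intros Hm. apply Hno. eauto. }
  assert (HB : forall y, Rabs (sigma y) <= 1).
  { intros y. specialize (sigma_range y). rewrite Rabs_right; lra. }
  assert (E := bounded_fdiff_n_zero_const rho n x0 sigma 1 HB Hz 1%nat).
  simpl in E. rewrite Rmult_1_l in E.
  specialize (Hr rho ltac:(rewrite Rabs_right; lra)).
  rewrite E, Rminus_diag, Rminus_0_l, Rabs_Ropp, Rabs_mult, (Rabs_right rho) in Hr by lra.
  nra.
Qed.

Lemma scaled_monomial_error n tau s be cn F eps : 0 < tau -> 0 < s <= be -> cn <> 0 -> 0 < eps ->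
  Rabs (F - (tau * s) ^ n * cn) <= 2 ^ n * ((tau * s) ^ n * (eps * Rabs cn / (2 * be) ^ n)) ->
  Rabs (s ^ n - / (tau ^ n * cn) * F) <= eps.
Proof.
  intros Htau Hs Hcn He Hest.
  assert (Hcn' : 0 < Rabs cn) by (apply Rabs_pos_lt; auto).
  assert (Htn : 0 < tau ^ n) by (apply pow_lt; auto).
  assert (Hbn : 0 < be ^ n) by (apply pow_lt; lra).
  assert (Hsn : s ^ n <= be ^ n) by (apply pow_incr; lra).
  assert (H2n : 0 < 2 ^ n) by (apply pow_lt; lra).
  replace (s ^ n - / (tau ^ n * cn) * F) with (- (F - (tau * s) ^ n * cn) / (tau ^ n * cn))
    by (rewrite Rpow_mult_distr; field; split; auto; lra).
  rewrite Rabs_div, Rabs_Ropp, Rabs_mult, (Rabs_right (tau ^ n))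
    by (try apply Rmult_integral_contrapositive; lra).
  apply Rle_div_l; [apply Rmult_lt_0_compat; lra|].
  eapply Rle_trans; [apply Hest|]. rewrite !Rpow_mult_distr.
  apply Rle_trans with (2 ^ n * (tau ^ n * be ^ n * (eps * Rabs cn / (2 ^ n * be ^ n)))).
  - apply Rmult_le_compat_l; [lra|]. apply Rmult_le_compat_r.
    + apply Rlt_le, Rdiv_lt_0_compat; [apply Rmult_lt_0_compat|apply Rmult_lt_0_compat]; lra.
    + apply Rmult_le_compat_l; lra.
  - right. field. split; lra.
Qed.

Section Monomial.

Variables (n : nat) (h b : R).
Hypothesis h_gt0 : 0 < h.
Hypothesis fdiff_neq0 : fdiff_n h n sigma b <> 0.

Let cn := fdiff_n h n sigma b.
Let G := avg_n h n sigma.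

(* By [avg_n_eq], [fdiff_n dl n G] is also the n-th h-difference of the n-fold
   dl-average of sigma, which is [dl ^ n * sigma] up to the oscillation of sigma. *)
Lemma fdiff_n_avg_n_close dl w : 0 < dl ->
  (forall t t', b <= t <= b + INR n * h -> t <= t' <= t + INR n * dl ->
     Rabs (sigma t' - sigma t) <= w) ->
  Rabs (fdiff_n dl n G b - dl ^ n * cn) <= 2 ^ n * (dl ^ n * w).
Proof.
  intros Hdl Hw. unfold G, cn.
  rewrite (avg_n_eq h n sigma sigma_cont), fdiff_n_comm, <- (avg_n_eq dl n sigma sigma_cont).
  rewrite <- fdiff_n_scal, <- fdiff_n_minus. apply Rabs_fdiff_n_le; [lra|].
  intros t Ht.
  assert (dl ^ n * (sigma t - w) <= avg_n dl n sigma t <= dl ^ n * (sigma t + w)).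
  { apply avg_n_between; auto. intros t' Ht'. specialize (Hw t t' Ht Ht').
    apply Rabs_le_between in Hw. lra. }
  apply Rabs_le_between. lra.
Qed.

Lemma monomial_fdiff_close be eps : 0 < be -> 0 < eps -> exists tau, 0 < tau /\
  forall s, 0 < s <= be -> Rabs (s ^ n - / (tau ^ n * cn) * fdiff_n (tau * s) n G b) <= eps.
Proof.
  intros Hbe He.
  assert (Hcn0 : cn <> 0) by exact fdiff_neq0.
  assert (Hcn : 0 < Rabs cn) by (apply Rabs_pos_lt; auto).
  assert (H2b : 0 < (2 * be) ^ n) by (apply pow_lt; lra).
  set (w := eps * Rabs cn / (2 * be) ^ n).
  assert (Hw : 0 < w) by (apply Rdiv_lt_0_compat; [apply Rmult_lt_0_compat|]; lra).
  assert (Hn0 : 0 <= INR n) by apply pos_INR.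
  destruct (unif_cont_interval sigma sigma_cont b (b + INR n * h + INR n + 1) w Hw)
    as [mu [Hmu Hu]].
  set (m1 := Rmin 1 (mu / (INR n + 1))).
  assert (Hm1 : 0 < m1 <= 1).
  { split; [apply Rmin_glb_lt; [lra|apply Rdiv_lt_0_compat; lra]|apply Rmin_l]. }
  assert (Hm1mu : INR n * m1 <= mu).
  { apply Rle_trans with ((INR n + 1) * (mu / (INR n + 1))); [|right; field; lra].
    assert (m1 <= mu / (INR n + 1)) by apply Rmin_r. apply Rmult_le_compat; lra. }
  exists (m1 / be). split; [apply Rdiv_lt_0_compat; lra|]. intros s Hs.
  set (tau := m1 / be).
  assert (Htau : 0 < tau) by (apply Rdiv_lt_0_compat; lra).
  assert (Hts : 0 < tau * s <= m1).
  { split; [apply Rmult_lt_0_compat; lra|].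
    apply Rle_trans with (tau * be); [apply Rmult_le_compat_l; lra|right; unfold tau; field; lra]. }
  assert (Hest : Rabs (fdiff_n (tau * s) n G b - (tau * s) ^ n * cn)
                 <= 2 ^ n * ((tau * s) ^ n * w)).
  { apply fdiff_n_avg_n_close; [lra|]. intros t t' Ht Ht'.
    assert (INR n * (tau * s) <= INR n * m1) by (apply Rmult_le_compat_l; lra).
    assert (INR n * m1 <= INR n) by nra.
    apply Hu; try lra. rewrite Rabs_right; lra. }
  apply scaled_monomial_error with (be := be); auto.
Qed.

End Monomial.

Lemma shallow_approx_monomial_pos n al be : 0 < al -> al <= be -> forall eps, 0 < eps ->
  exists l c0, forall s, al <= s <= be -> Rabs (s ^ n - (c0 + shallow l s)) <= eps.
Proof.
  intros Hal Hab eps He.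
  destruct exists_fdiff_n_neq0 as [h [Hh Hex]]. destruct (Hex n) as [b Hb].
  destruct (monomial_fdiff_close n h b Hh Hb be (eps / 2)) as [tau [Htau Hclose]]; [lra|lra|].
  set (G := avg_n h n sigma).
  assert (Happ : shallow_approx_on be (fun s =>
                   / (tau ^ n * fdiff_n h n sigma b) * fdiff_n (tau * s) n G (0 * s + b))).
  { apply shallow_approx_on_scal, shallow_approx_fdiff_n_scaled, shallow_approx_avg_n; auto. }
  destruct (Happ (eps / 2)) as (l & c0 & Hl); [lra|].
  exists l, c0. intros s Hs.
  specialize (Hl s ltac:(rewrite Rabs_right; lra)). rewrite Rmult_0_l, Rplus_0_l in Hl.
  specialize (Hclose s ltac:(lra)).
  replace (s ^ n - (c0 + shallow l s)) with
    ((s ^ n - / (tau ^ n * fdiff_n h n sigma b) * fdiff_n (tau * s) n G b)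
     + (/ (tau ^ n * fdiff_n h n sigma b) * fdiff_n (tau * s) n G b - (c0 + shallow l s))) by ring.
  eapply Rle_trans; [apply Rabs_triang|]. unfold G in *. lra.
Qed.

Lemma shallow_approx_on_sum_f_R0 (f : nat -> R -> R) N r :
  (forall i, shallow_approx_on r (f i)) ->
  shallow_approx_on r (fun s => sum_f_R0 (fun i => f i s) N).
Proof. intros H. induction N; simpl; [apply H|apply shallow_approx_on_plus; auto]. Qed.

(* Binomial expansion around [-(Q + 1)] reduces powers on [-Q, Q] to powers on [1, 2Q + 1]. *)
Lemma shallow_approx_pow n : shallow_approx (fun s => s ^ n).
Proof.
  intros r. apply shallow_approx_on_le with (Rabs r); [apply Rle_abs|].
  set (Q := Rabs r). assert (HQ : 0 <= Q) by apply Rabs_pos.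
  assert (Hshift : forall i, shallow_approx_on Q (fun s => (s + (Q + 1)) ^ i)).
  { intros i eps He.
    destruct (shallow_approx_monomial_pos i 1 (2 * Q + 1) ltac:(lra) ltac:(lra) eps He)
      as (l & c0 & Hl).
    exists (shallow_affine 1 (Q + 1) l), c0. intros s Hs. rewrite shallow_affineE, Rmult_1_l.
    apply Hl. apply Rabs_le_between in Hs. lra. }
  apply shallow_approx_on_ext with
    (fun s => sum_f_R0 (fun i => Binomial.C n i * (- (Q + 1)) ^ (n - i) * (s + (Q + 1)) ^ i) n).
  - intros s _. replace s with ((s + (Q + 1)) + - (Q + 1)) at 1 by ring. rewrite binomial.
    apply sum_eq. intros; ring.
  - apply shallow_approx_on_sum_f_R0. intros i. apply shallow_approx_on_scal, Hshift.
Qed.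

Lemma shallow_approx_poly l : shallow_approx (poly_eval l).
Proof.
  induction l as [|[c k] l IH]; intros r; simpl.
  - apply shallow_approx_on_const.
  - apply shallow_approx_on_plus; auto. apply shallow_approx_on_scal, shallow_approx_pow.
Qed.

Lemma shallow_approx_abs : shallow_approx Rabs.
Proof.
  intros r. apply shallow_approx_on_le with (Rabs r); [apply Rle_abs|].
  set (K := Rabs r + 1). assert (HK : 1 <= K) by (unfold K; pose proof (Rabs_pos r); lra).
  apply shallow_approx_on_lim. intros eps He.
  destruct (abs_approx_unif (eps / K)) as [n Hn]; [apply Rdiv_lt_0_compat; lra|].
  destruct (abs_approx_poly n) as [l Hl].
  exists (fun s => K * poly_eval l (/ K * s + 0)). split.
  - apply shallow_approx_on_scal, shallow_approx_on_affine, shallow_approx_poly.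
  - intros s Hs. rewrite <- Hl. replace (/ K * s + 0) with (s / K) by (field; lra).
    assert (Hsk : Rabs (s / K) <= 1).
    { rewrite Rabs_div, (Rabs_right K) by lra. apply Rle_div_l; unfold K in *; lra. }
    replace (Rabs s) with (K * Rabs (s / K))
      by (rewrite Rabs_div, (Rabs_right K) by lra; field; lra).
    rewrite <- Rmult_minus_distr_l, Rabs_mult, (Rabs_right K) by lra.
    specialize (Hn _ Hsk).
    apply Rle_trans with (K * (eps / K)); [apply Rmult_le_compat_l; lra|right; field; lra].
Qed.

Lemma shallow_approx_tent : shallow_approx tent.
Proof.
  intros r.
  apply shallow_approx_on_ext with
    (fun s => / 2 * ((Rabs (1 * s + 1) - 2 * Rabs (1 * s + 0)) + Rabs (1 * s + -1))).
  - intros s _. unfold tent. rewrite !Rmult_1_l, Rplus_0_r.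
    replace (s + -1) with (s - 1) by ring. field.
  - apply shallow_approx_on_scal, shallow_approx_on_plus; [apply shallow_approx_on_minus|];
      [|apply shallow_approx_on_scal|]; apply shallow_approx_affine, shallow_approx_abs.
Qed.

(* Piecewise linear interpolation at the nodes [-Q + j hs]. *)
Theorem shallow_approx_cont phi : cont_R phi -> shallow_approx phi.
Proof.
  intros Hc r. apply shallow_approx_on_le with (Rabs r + 1); [pose proof (Rle_abs r); lra|].
  set (Q := Rabs r + 1). assert (HQ : 1 <= Q) by (unfold Q; pose proof (Rabs_pos r); lra).
  apply shallow_approx_on_lim. intros eps He.
  destruct (unif_cont_interval phi Hc (- Q) Q eps He) as [mu [Hmu Hu]].
  destruct (INR_archimed mu (2 * Q) Hmu) as [N HN].
  assert (HNr : 0 < INR N) by (destruct N; simpl in HN; [lra|apply lt_0_INR; lia]).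
  set (hs := 2 * Q / INR N).
  assert (Hhs : 0 < hs) by (apply Rdiv_lt_0_compat; lra).
  assert (Hhsmu : hs <= mu) by (apply Rle_div_l; lra).
  assert (HNhs : INR N * hs = 2 * Q) by (unfold hs; field; lra).
  exists (fun s => rsum (fun j => tent (/ hs * s + (Q / hs - INR j)) * phi (- Q + INR j * hs))
                        0 (S N)).
  split.
  - apply shallow_approx_on_rsum. intros j.
    apply (shallow_approx_on_ext _
             (fun s => phi (- Q + INR j * hs) * tent (/ hs * s + (Q / hs - INR j))));
      [intros; ring|].
    apply shallow_approx_on_scal, shallow_approx_affine, shallow_approx_tent.
  - intros s Hs. apply Rabs_le_between in Hs.
    set (u := (s + Q) / hs).
    rewrite (rsum_ext _ (fun j => tent (u - INR j) * phi (- Q + INR j * hs)))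
      by (intros; unfold u; do 2 f_equal; field; lra).
    apply tent_interp_error.
    + unfold u. split; [apply Rmult_le_pos; [lra|left; apply Rinv_0_lt_compat; lra]|].
      apply Rle_div_l; lra.
    + intros j Hj Hclose.
      assert (INR j * hs <= 2 * Q)
        by (rewrite <- HNhs; apply Rmult_le_compat_r; [lra|apply le_INR; lia]).
      assert (0 <= INR j * hs) by (apply Rmult_le_pos; [apply pos_INR|lra]).
      apply Hu; try lra.
      replace (s - (- Q + INR j * hs)) with (hs * (u - INR j)) by (unfold u; field; lra).
      rewrite Rabs_mult, Rabs_right by lra. nra.
Qed.

(** * Deep narrow networks *)

Definition act_fn (act : bool) (z : R) : R := if act then sigma z else z.

Definition layer_map (m : nat) (kind : nat -> bool) (w : nat -> nat -> R) (b : nat -> R)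
    (y : nat -> R) (k : nat) : R :=
  act_fn (kind k) (sum0 m (fun j => w k j * y j) + b k).

(* A true sigma-neuron realises a linear one via [lin_unit]: its input is scaled by
   [in_gain] and shifted by [in_off], its output is read off by [out_off + out_gain * _]. *)
Definition in_gain (act : bool) (dl : R) : R := if act then 1 else dl.
Definition in_off (act : bool) : R := if act then 0 else x0.
Definition out_gain (act : bool) (dl : R) : R := if act then 1 else / (dl * D).
Definition out_off (act : bool) (dl : R) : R := if act then 0 else - sigma x0 / (dl * D).

Lemma neuron_readout_stable K eps : 0 <= K -> 0 < eps -> exists dl mu, 0 < dl <= 1 /\ 0 < mu /\
  forall act z z', Rabs z <= K -> Rabs (z' - z) <= mu ->
    Rabs (out_off act dl + out_gain act dl * sigma (in_off act + in_gain act dl * z')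
          - act_fn act z) <= eps.
Proof.
  intros HK He.
  destruct (lin_unit_stable K eps HK He) as (dl & mu1 & Hdl & Hmu1 & Hlin).
  destruct (unif_cont_interval sigma sigma_cont (- K - 1) (K + 1) eps He) as [mu2 [Hmu2 Hu]].
  exists dl, (Rmin 1 (Rmin mu1 mu2)). split; auto.
  split; [apply Rmin_glb_lt; [lra|apply Rmin_glb_lt; lra]|].
  intros act z z' Hz Hzz.
  pose proof (Rmin_l 1 (Rmin mu1 mu2)). pose proof (Rmin_r 1 (Rmin mu1 mu2)).
  pose proof (Rmin_l mu1 mu2). pose proof (Rmin_r mu1 mu2).
  destruct act; simpl.
  - rewrite Rplus_0_l, !Rmult_1_l, Rplus_0_l.
    apply Rabs_le_between in Hz. apply Rabs_le_between in Hzz as Hzz'.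
    apply Hu; lra.
  - replace (- sigma x0 / (dl * D) + / (dl * D) * sigma (x0 + dl * z') - z)
      with (lin_unit dl z' - z) by (unfold lin_unit; field; lra).
    apply Hlin; auto. lra.
Qed.

Variables d p : nat.

Definition deep_approx (v : (nat -> R) -> nat -> R) : Prop :=
  forall eps, 0 < eps -> exists n W1 b1 W bl (a s : nat -> R),
    forall x, in_cube d x -> forall k, (k < p)%nat ->
      Rabs (a k + s k * layer sigma d p W1 b1 W bl n x k - v x k) <= eps.

Definition bounded_state (v : (nat -> R) -> nat -> R) : Prop :=
  exists U, forall x, in_cube d x -> forall k, (k < p)%nat -> Rabs (v x k) <= U.

Lemma deep_approx_lim v : (forall eps, 0 < eps -> exists v', deep_approx v' /\
   forall x, in_cube d x -> forall k, (k < p)%nat -> Rabs (v' x k - v x k) <= eps) -> deep_approx v.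
Proof.
  intros H eps He. destruct (H (eps / 2)) as [v' [Hv' Hc]]; [lra|].
  destruct (Hv' (eps / 2)) as (n & W1 & b1 & W & bl & a & s & Hn); [lra|].
  exists n, W1, b1, W, bl, a, s. intros x Hx k Hk.
  specialize (Hn x Hx k Hk). specialize (Hc x Hx k Hk).
  replace (a k + s k * layer sigma d p W1 b1 W bl n x k - v x k) with
    ((a k + s k * layer sigma d p W1 b1 W bl n x k - v' x k) + (v' x k - v x k)) by ring.
  eapply Rle_trans; [apply Rabs_triang|lra].
Qed.

Lemma deep_approx_ext v v' : (forall x, in_cube d x -> forall k, (k < p)%nat -> v x k = v' x k) ->
  deep_approx v -> deep_approx v'.
Proof.
  intros He H eps Heps. destruct (H eps Heps) as (n & W1 & b1 & W & bl & a & s & Hn).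
  exists n, W1, b1, W, bl, a, s. intros x Hx k Hk. rewrite <- He by auto. auto.
Qed.

Definition extend_at {T} (l : nat) (F : nat -> T) (v : T) : nat -> T :=
  fun l' => if Nat.eqb l' l then v else F l'.

Lemma layer_ext W1 b1 W W' bl bl' n :
  (forall l, (l <= S n)%nat -> W' l = W l /\ bl' l = bl l) ->
  layer sigma d p W1 b1 W' bl' n = layer sigma d p W1 b1 W bl n.
Proof.
  induction n; intros H; extensionality x; [reflexivity|].
  simpl. rewrite IHn by (intros; apply H; lia).
  destruct (H (S (S n))) as [-> ->]; [lia|]. reflexivity.
Qed.

(* Hidden layer [S n] uses the weights indexed [S (S n)]. *)
Lemma layer_extend_at W1 b1 W bl n Wn bn x k :
  layer sigma d p W1 b1 (extend_at (S (S n)) W Wn) (extend_at (S (S n)) bl bn) (S n) x k =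
  sigma (sum0 p (fun j => Wn k j * layer sigma d p W1 b1 W bl n x j) + bn k).
Proof.
  simpl. rewrite (layer_ext W1 b1 W _ bl _).
  - unfold extend_at. rewrite Nat.eqb_refl. reflexivity.
  - intros l Hl. unfold extend_at. destruct (Nat.eqb_spec l (S (S n))); [lia|auto].
Qed.

Lemma layer_map_readout_close m kind w b U eps : 0 <= U -> 0 < eps ->
  exists dl eta, 0 < dl <= 1 /\ 0 < eta /\
  forall (y u : nat -> R) k, (k < p)%nat -> (forall j, (j < m)%nat -> Rabs (y j) <= U) ->
    (forall j, (j < m)%nat -> Rabs (u j - y j) <= eta) ->
    Rabs (out_off (kind k) dl + out_gain (kind k) dl *
            sigma (in_off (kind k) + in_gain (kind k) dl * (sum0 m (fun j => w k j * u j) + b k))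
          - layer_map m kind w b y k) <= eps.
Proof.
  intros HU He.
  set (WS := sum0 p (fun k => sum0 m (fun j => Rabs (w k j)))).
  set (BS := sum0 p (fun k => Rabs (b k))).
  assert (Hw : forall k, 0 <= sum0 m (fun j => Rabs (w k j)))
    by (intros; apply rsum_nonneg; intros; apply Rabs_pos).
  assert (HWS : 0 <= WS) by (apply rsum_nonneg; auto).
  assert (HBS : 0 <= BS) by (apply rsum_nonneg; intros; apply Rabs_pos).
  destruct (neuron_readout_stable (WS * U + BS) eps) as (dl & mu & Hdl & Hmu & Hn); [nra|auto|].
  exists dl, (mu / (WS + 1)). split; auto. split; [apply Rdiv_lt_0_compat; lra|].
  intros y u k Hk Hy Hu.
  assert (Hwk : sum0 m (fun j => Rabs (w k j)) <= WS).
  { apply (rsum_ge_term (fun k => sum0 m (fun j => Rabs (w k j)))); auto. lia. }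
  assert (Hbk : Rabs (b k) <= BS).
  { apply (rsum_ge_term (fun k => Rabs (b k))); [intros; apply Rabs_pos|lia]. }
  apply Hn.
  - eapply Rle_trans; [apply Rabs_triang|].
    pose proof (Rabs_sum0_mult_bound m (w k) y U Hy). nra.
  - replace (sum0 m (fun j => w k j * u j) + b k - (sum0 m (fun j => w k j * y j) + b k))
      with (sum0 m (fun j => w k j * u j) - sum0 m (fun j => w k j * y j)) by ring.
    eapply Rle_trans; [apply Rabs_sum0_mult_sub, Hu|].
    apply Rle_trans with ((WS + 1) * (mu / (WS + 1))); [|right; field; lra].
    apply Rmult_le_compat_r; [left; apply Rdiv_lt_0_compat|]; lra.
Qed.

Lemma bounded_state_nonneg v U :
  (forall x, in_cube d x -> forall k, (k < p)%nat -> Rabs (v x k) <= U) -> (0 < p)%nat -> 0 <= U.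
Proof.
  intros HU Hp. assert (Hc : in_cube d (fun _ => 0)) by (intros i _; lra).
  eapply Rle_trans; [apply Rabs_pos|apply (HU _ Hc 0%nat Hp)].
Qed.

(* The appended layer absorbs the read-outs [a j + s j * _] of the previous one. *)
Lemma deep_approx_layer_map kind w b v :
  deep_approx v -> bounded_state v -> deep_approx (fun x k => layer_map p kind w b (v x) k).
Proof.
  intros Hv [U HU] eps He.
  destruct (Nat.eq_0_gt_0_cases p) as [Hp0|Hp].
  { exists 0%nat, (fun _ _ => 0), (fun _ => 0), (fun _ _ _ => 0), (fun _ _ => 0),
      (fun _ => 0), (fun _ => 0). intros; lia. }
  pose proof (bounded_state_nonneg v U HU Hp) as HU0.
  destruct (layer_map_readout_close p kind w b U eps HU0 He) as (dl & eta & Hdl & Heta & Hc).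
  destruct (Hv eta Heta) as (n & W1 & b1 & W & bl & a & s & Hn).
  set (g := fun k => in_gain (kind k) dl).
  set (Wn := fun k j => g k * w k j * s j).
  set (bn := fun k => in_off (kind k) + g k * (b k + sum0 p (fun j => w k j * a j))).
  exists (S n), W1, b1, (extend_at (S (S n)) W Wn), (extend_at (S (S n)) bl bn),
    (fun k => out_off (kind k) dl), (fun k => out_gain (kind k) dl).
  intros x Hx k Hk. rewrite layer_extend_at.
  set (y := layer sigma d p W1 b1 W bl n x).
  replace (sum0 p (fun j => Wn k j * y j) + bn k) with
    (in_off (kind k) + g k * (sum0 p (fun j => w k j * (a j + s j * y j)) + b k)).
  - apply Hc; auto. intros j Hj. apply Hn; auto.
  - unfold Wn, bn, sum0.
    rewrite (rsum_ext _ (fun j => w k j * a j + w k j * s j * y j)) by (intros; ring).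
    rewrite (rsum_ext (fun j => g k * w k j * s j * y j) (fun j => g k * (w k j * s j * y j)))
      by (intros; ring).
    rewrite rsum_plus, rsum_scal. ring.
Qed.

Lemma deep_approx_input_map kind w b : deep_approx (fun x k => layer_map d kind w b x k).
Proof.
  intros eps He.
  destruct (layer_map_readout_close d kind w b 1 eps ltac:(lra) He) as (dl & eta & Hdl & Heta & Hc).
  set (g := fun k => in_gain (kind k) dl).
  exists 0%nat, (fun k i => g k * w k i), (fun k => in_off (kind k) + g k * b k),
    (fun _ _ _ => 0), (fun _ _ => 0),
    (fun k => out_off (kind k) dl), (fun k => out_gain (kind k) dl).
  intros x Hx k Hk. simpl.
  replace (sum0 d (fun i => g k * w k i * x i) + (in_off (kind k) + g k * b k)) with
    (in_off (kind k) + g k * (sum0 d (fun j => w k j * x j) + b k)).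
  - apply Hc; auto.
    + intros j Hj. specialize (Hx j Hj). apply Rabs_le_between. lra.
    + intros j Hj. rewrite Rminus_diag, Rabs_R0. lra.
  - unfold sum0.
    rewrite (rsum_ext (fun i => g k * w k i * x i) (fun i => g k * (w k i * x i)))
      by (intros; ring).
    rewrite rsum_scal. ring.
Qed.

Section Registers.

Hypothesis width : (d + 3 <= p)%nat.

(* Neurons [0 .. d-1] carry the input [x]; neurons [d], [d+1], [d+2] hold the
   registers [a] (accumulator), [t] (scratch) and [u] (one sigma-unit). *)
Definition regs (a t u : (nat -> R) -> R) (x : nat -> R) (k : nat) : R :=
  if Nat.ltb k d then x k else if Nat.eqb k d then a x else if Nat.eqb k (S d) then t x
  else if Nat.eqb k (S (S d)) then u x else 0.

Definition bounded_fn (g : (nat -> R) -> R) : Prop :=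
  exists B, forall x, in_cube d x -> Rabs (g x) <= B.

Lemma bounded_fn_const c : bounded_fn (fun _ => c).
Proof. exists (Rabs c). intros; lra. Qed.

Lemma bounded_fn_plus f g : bounded_fn f -> bounded_fn g -> bounded_fn (fun x => f x + g x).
Proof.
  intros [B1 H1] [B2 H2]. exists (B1 + B2). intros x Hx.
  eapply Rle_trans; [apply Rabs_triang|]. specialize (H1 x Hx); specialize (H2 x Hx); lra.
Qed.

Lemma bounded_fn_scal c g : bounded_fn g -> bounded_fn (fun x => c * g x).
Proof.
  intros [B H]. exists (Rabs c * B). intros x Hx. rewrite Rabs_mult.
  apply Rmult_le_compat_l; auto using Rabs_pos.
Qed.

Lemma bounded_fn_sigma g : bounded_fn (fun x => sigma (g x)).
Proof. exists 1. intros. specialize (sigma_range (g x)). rewrite Rabs_right; lra. Qed.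

Lemma bounded_fn_shallow c0 l g : bounded_fn (fun x => c0 + shallow l (g x)).
Proof.
  apply bounded_fn_plus; [apply bounded_fn_const|].
  exists (shallow_weight l). intros. apply Rabs_shallow_le.
Qed.

Lemma bounded_state_regs a t u :
  bounded_fn a -> bounded_fn t -> bounded_fn u -> bounded_state (regs a t u).
Proof.
  intros [Ba HBa] [Bt HBt] [Bu HBu].
  exists (1 + Rabs Ba + Rabs Bt + Rabs Bu). intros x Hx k Hk.
  pose proof (Rle_abs Ba). pose proof (Rle_abs Bt). pose proof (Rle_abs Bu).
  pose proof (Rabs_pos Ba). pose proof (Rabs_pos Bt). pose proof (Rabs_pos Bu).
  specialize (HBa x Hx). specialize (HBt x Hx). specialize (HBu x Hx).
  unfold regs. case_nat; try lra.
  - specialize (Hx k ltac:(lia)). rewrite Rabs_right; lra.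
  - rewrite Rabs_R0. lra.
Qed.

Lemma deep_approx_regs_ext a t u a' t' u' :
  (forall x, in_cube d x -> a x = a' x /\ t x = t' x /\ u x = u' x) ->
  deep_approx (regs a t u) -> deep_approx (regs a' t' u').
Proof.
  intros H. apply deep_approx_ext. intros x Hx k Hk. destruct (H x Hx) as (Ha & Ht & Hu).
  unfold regs. rewrite Ha, Ht, Hu. auto.
Qed.

Record lin_form := { lf_x : nat -> R; lf_a : R; lf_t : R; lf_u : R; lf_c : R }.

Definition lf_eval (F : lin_form) (x : nat -> R) (a t u : R) : R :=
  sum0 d (fun i => lf_x F i * x i) + lf_a F * a + lf_t F * t + lf_u F * u + lf_c F.

Definition lf_row (F : lin_form) (j : nat) : R :=
  if Nat.ltb j d then lf_x F j else if Nat.eqb j d then lf_a F else if Nat.eqb j (S d) then lf_t F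
  else if Nat.eqb j (S (S d)) then lf_u F else 0.

Definition lf_atu (ca ct cu c : R) : lin_form := Build_lin_form (fun _ => 0) ca ct cu c.

Lemma lf_eval_atu ca ct cu c x a t u :
  lf_eval (lf_atu ca ct cu c) x a t u = ca * a + ct * t + cu * u + c.
Proof.
  unfold lf_eval, lf_atu; simpl. unfold sum0.
  rewrite (rsum_ext _ (fun _ => 0)), rsum_zero by (intros; ring). ring.
Qed.

Lemma lf_row_regs F a t u x :
  sum0 p (fun j => lf_row F j * regs a t u x j) + lf_c F = lf_eval F x (a x) (t x) (u x).
Proof.
  unfold lf_eval, sum0. replace p with (d + (3 + (p - d - 3)))%nat by lia.
  rewrite rsum_add_len, (rsum_add_len _ (0 + d) 3). cbn [rsum].
  rewrite (rsum_ext _ (fun i => lf_x F i * x i)) by (intros; unfold lf_row, regs; case_nat; auto).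
  rewrite (rsum_ext _ (fun _ => 0) (0 + d + 3)), rsum_zero
    by (intros; unfold lf_row, regs; case_nat; ring).
  unfold lf_row, regs. case_nat. ring.
Qed.

Lemma deep_approx_regs_step (ka kt ku : bool) (Fa Ft Fu : lin_form) a t u :
  deep_approx (regs a t u) -> bounded_fn a -> bounded_fn t -> bounded_fn u ->
  deep_approx (regs (fun x => act_fn ka (lf_eval Fa x (a x) (t x) (u x)))
                    (fun x => act_fn kt (lf_eval Ft x (a x) (t x) (u x)))
                    (fun x => act_fn ku (lf_eval Fu x (a x) (t x) (u x)))).
Proof.
  intros HE Ha Ht Hu.
  set (kind := fun k => if Nat.eqb k d then ka else if Nat.eqb k (S d) then kt
                        else if Nat.eqb k (S (S d)) then ku else false).
  set (form := fun k => if Nat.eqb k d then Fa else if Nat.eqb k (S d) then Ft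
                        else if Nat.eqb k (S (S d)) then Fu else lf_atu 0 0 0 0).
  set (w := fun k j => if Nat.ltb k d then delta_nat j k else lf_row (form k) j).
  set (b := fun k => if Nat.ltb k d then 0 else lf_c (form k)).
  eapply deep_approx_ext;
    [|apply (deep_approx_layer_map kind w b); [apply HE|apply bounded_state_regs; auto]].
  intros x Hx k Hk. unfold layer_map, w, b.
  destruct (Nat.ltb_spec k d).
  - unfold sum0. rewrite rsum_delta by lia.
    unfold kind, regs. case_nat. simpl. ring.
  - fold (sum0 p (fun j => lf_row (form k) j * regs a t u x j)). rewrite lf_row_regs.
    unfold kind, form, regs. case_nat; auto.
    rewrite lf_eval_atu. simpl. ring.
Qed.

Notation zero_fn := (fun _ : nat -> R => 0).

Lemma deep_approx_regs_init : deep_approx (regs zero_fn zero_fn zero_fn).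
Proof.
  eapply deep_approx_ext;
    [|apply (deep_approx_input_map (fun _ => false)
               (fun k i => if Nat.ltb k d then delta_nat i k else 0) (fun _ => 0))].
  intros x Hx k Hk. unfold layer_map, regs, sum0. simpl. destruct (Nat.ltb_spec k d).
  - rewrite rsum_delta by lia. ring.
  - rewrite (rsum_ext _ (fun _ => 0)), rsum_zero by (intros; ring). case_nat; ring.
Qed.

Ltac regs_eq :=
  intros ? ?; cbv beta; rewrite ?lf_eval_atu; simpl;
  repeat split; first [ring | f_equal; ring | reflexivity].

Lemma deep_approx_regs_add_t_unit i al be c a t : (i < d)%nat ->
  deep_approx (regs a t zero_fn) -> bounded_fn a -> bounded_fn t ->
  deep_approx (regs a (fun x => t x + c * sigma (al * x i + be)) zero_fn).
Proof.
  intros Hi HE Ha Ht.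
  assert (Hu : deep_approx (regs a t (fun x => sigma (al * x i + be)))).
  { eapply deep_approx_regs_ext;
      [|apply (deep_approx_regs_step false false true (lf_atu 1 0 0 0) (lf_atu 0 1 0 0)
                 (Build_lin_form (fun j => delta_nat j i * al) 0 0 0 be) a t zero_fn);
        auto using bounded_fn_const].
    intros x Hx. cbv beta. rewrite !lf_eval_atu. simpl. split; [ring|split; [ring|]].
    unfold lf_eval, sum0; simpl.
    rewrite (rsum_ext _ (fun j => delta_nat j i * (al * x j))), rsum_delta by (lia || intros; ring).
    f_equal. ring. }
  eapply deep_approx_regs_ext; [|apply (deep_approx_regs_step false false false
    (lf_atu 1 0 0 0) (lf_atu 0 1 c 0) (lf_atu 0 0 0 0) _ _ _ Hu); auto using bounded_fn_sigma].
  regs_eq.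
Qed.

Lemma deep_approx_regs_add_a_unit al be c a t :
  deep_approx (regs a t zero_fn) -> bounded_fn a -> bounded_fn t ->
  deep_approx (regs (fun x => a x + c * sigma (al * t x + be)) t zero_fn).
Proof.
  intros HE Ha Ht.
  assert (Hu : deep_approx (regs a t (fun x => sigma (al * t x + be)))).
  { eapply deep_approx_regs_ext; [|apply (deep_approx_regs_step false false true
      (lf_atu 1 0 0 0) (lf_atu 0 1 0 0) (lf_atu 0 al 0 be) _ _ _ HE); auto using bounded_fn_const].
    regs_eq. }
  eapply deep_approx_regs_ext; [|apply (deep_approx_regs_step false false false
    (lf_atu 1 0 c 0) (lf_atu 0 1 0 0) (lf_atu 0 0 0 0) _ _ _ Hu); auto using bounded_fn_sigma].
  regs_eq.
Qed.

Lemma deep_approx_regs_add_t_shallow i c0 l a t : (i < d)%nat ->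
  deep_approx (regs a t zero_fn) -> bounded_fn a -> bounded_fn t ->
  deep_approx (regs a (fun x => t x + (c0 + shallow l (x i))) zero_fn).
Proof.
  intros Hi HE Ha Ht.
  assert (Hadd : forall t', deep_approx (regs a t' zero_fn) -> bounded_fn t' ->
            deep_approx (regs a (fun x => t' x + shallow l (x i)) zero_fn)).
  { induction l as [|[[c al] be] l IH]; intros t' H Hb; simpl.
    - eapply deep_approx_regs_ext; [|apply H]. regs_eq.
    - eapply deep_approx_regs_ext;
        [|apply (IH (fun x => t' x + c * sigma (al * x i + be)));
          [apply deep_approx_regs_add_t_unit; auto|
           apply bounded_fn_plus, bounded_fn_scal, bounded_fn_sigma; auto]].
      regs_eq. }
  eapply deep_approx_regs_ext; [|apply (Hadd (fun x => t x + c0))]; [regs_eq| |].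
  - eapply deep_approx_regs_ext; [|apply (deep_approx_regs_step false false false
      (lf_atu 1 0 0 0) (lf_atu 0 1 0 c0) (lf_atu 0 0 0 0) _ _ _ HE); auto using bounded_fn_const].
    regs_eq.
  - apply bounded_fn_plus; auto using bounded_fn_const.
Qed.

Lemma deep_approx_regs_add_a_shallow c0 l a t :
  deep_approx (regs a t zero_fn) -> bounded_fn a -> bounded_fn t ->
  deep_approx (regs (fun x => a x + (c0 + shallow l (t x))) t zero_fn).
Proof.
  intros HE Ha Ht.
  assert (Hadd : forall a', deep_approx (regs a' t zero_fn) -> bounded_fn a' ->
            deep_approx (regs (fun x => a' x + shallow l (t x)) t zero_fn)).
  { induction l as [|[[c al] be] l IH]; intros a' H Hb; simpl.
    - eapply deep_approx_regs_ext; [|apply H]. regs_eq.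
    - eapply deep_approx_regs_ext;
        [|apply (IH (fun x => a' x + c * sigma (al * t x + be)));
          [apply deep_approx_regs_add_a_unit; auto|
           apply bounded_fn_plus, bounded_fn_scal, bounded_fn_sigma; auto]].
      regs_eq. }
  eapply deep_approx_regs_ext; [|apply (Hadd (fun x => a x + c0))]; [regs_eq| |].
  - eapply deep_approx_regs_ext; [|apply (deep_approx_regs_step false false false
      (lf_atu 1 0 0 c0) (lf_atu 0 1 0 0) (lf_atu 0 0 0 0) _ _ _ HE); auto using bounded_fn_const].
    regs_eq.
  - apply bounded_fn_plus; auto using bounded_fn_const.
Qed.

Lemma deep_approx_regs_clear_t a t :
  deep_approx (regs a t zero_fn) -> bounded_fn a -> bounded_fn t ->
  deep_approx (regs a zero_fn zero_fn).
Proof.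
  intros HE Ha Ht. eapply deep_approx_regs_ext; [|apply (deep_approx_regs_step false false false
    (lf_atu 1 0 0 0) (lf_atu 0 0 0 0) (lf_atu 0 0 0 0) _ _ _ HE); auto using bounded_fn_const].
  regs_eq.
Qed.

(** * Functions that can be added to the accumulator *)

Definition addable (g : (nat -> R) -> R) : Prop :=
  bounded_fn g /\ forall a, bounded_fn a -> deep_approx (regs a zero_fn zero_fn) ->
    deep_approx (regs (fun x => a x + g x) zero_fn zero_fn).

Lemma addable_ext g g' : (forall x, g x = g' x) -> addable g -> addable g'.
Proof.
  intros E H. replace g' with g; auto. extensionality x. auto.
Qed.

Lemma addable_zero : addable zero_fn.
Proof.
  split; [apply bounded_fn_const|]. intros a Ha HE.
  eapply deep_approx_regs_ext; [|apply HE]. regs_eq.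
Qed.

Lemma addable_plus g1 g2 : addable g1 -> addable g2 -> addable (fun x => g1 x + g2 x).
Proof.
  intros [B1 H1] [B2 H2]. split; [apply bounded_fn_plus; auto|].
  intros a Ha HE. eapply deep_approx_regs_ext;
    [|apply (H2 _ (bounded_fn_plus _ _ Ha B1) (H1 a Ha HE))].
  regs_eq.
Qed.

Lemma addable_rsum (G : nat -> (nat -> R) -> R) m n :
  (forall j, addable (G j)) -> addable (fun x => rsum (fun j => G j x) m n).
Proof.
  intros H. revert m. induction n; intros m; [apply addable_zero|].
  apply (addable_ext (fun x => G m x + rsum (fun j => G j x) (S m) n)); [reflexivity|].
  apply addable_plus; auto.
Qed.

Lemma addable_grid_sum N m (F : (nat -> nat) -> (nat -> R) -> R) :
  (forall c, addable (F c)) -> addable (fun x => grid_sum N m (fun c => F c x)).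
Proof.
  revert F. induction m; intros F H; [apply H|].
  apply (addable_rsum (fun j x => grid_sum N m (fun c => F (upd c m j) x))).
  intros j. apply IHm. auto.
Qed.

Lemma addable_lim g : bounded_fn g ->
  (forall eps, 0 < eps -> exists g', addable g' /\
     forall x, in_cube d x -> Rabs (g' x - g x) <= eps) ->
  addable g.
Proof.
  intros Hb H. split; auto. intros a Ha HE. apply deep_approx_lim. intros eps He.
  destruct (H eps He) as (g' & [_ Hg'] & Hc).
  exists (regs (fun x => a x + g' x) zero_fn zero_fn). split; auto.
  intros x Hx k Hk. unfold regs. case_nat; try (rewrite Rminus_diag, Rabs_R0; lra).
  replace (a x + g' x - (a x + g x)) with (g' x - g x) by ring. auto.
Qed.

Definition t_loadable (h : (nat -> R) -> R) : Prop :=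
  forall a, bounded_fn a -> deep_approx (regs a zero_fn zero_fn) -> deep_approx (regs a h zero_fn).

Lemma t_loadable_coord_sum (l : nat -> R -> R) eta m :
  (forall i, cont_R (l i)) -> 0 < eta -> (m <= d)%nat ->
  exists h, bounded_fn h /\ t_loadable h /\
    forall x, in_cube d x -> Rabs (h x - rsum (fun i => l i (x i)) 0 m) <= INR m * eta.
Proof.
  intros Hc He. induction m; intros Hm.
  - exists zero_fn. split; [apply bounded_fn_const|]. split; [intros a _ H; exact H|].
    intros. simpl. rewrite Rminus_0_r, Rabs_R0. lra.
  - destruct IHm as (h & Hb & Hload & Herr); [lia|].
    destruct (shallow_approx_cont (l m) (Hc m) 1 eta He) as (l0 & c0 & Hn).
    exists (fun x => h x + (c0 + shallow l0 (x m))).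
    split; [apply bounded_fn_plus, bounded_fn_shallow; auto|]. split.
    + intros a Ha HE. apply deep_approx_regs_add_t_shallow; auto; lia.
    + intros x Hx. rewrite rsum_S_last, S_INR. simpl (0 + m)%nat.
      specialize (Herr x Hx).
      assert (Rabs (l m (x m) - (c0 + shallow l0 (x m))) <= eta).
      { apply Hn. specialize (Hx m ltac:(lia)). apply Rabs_le_between. lra. }
      replace (h x + (c0 + shallow l0 (x m)) - (rsum (fun i => l i (x i)) 0 m + l m (x m))) with
        ((h x - rsum (fun i => l i (x i)) 0 m) - (l m (x m) - (c0 + shallow l0 (x m)))) by ring.
      eapply Rle_trans; [apply Rabs_triang|]. rewrite Rabs_Ropp. lra.
Qed.

Lemma addable_shallow_of_loadable c0 l h : bounded_fn h -> t_loadable h ->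
  addable (fun x => c0 + shallow l (h x)).
Proof.
  intros Hb Hload. split; [apply bounded_fn_shallow|]. intros a Ha HE.
  apply (deep_approx_regs_clear_t _ h); auto.
  - apply deep_approx_regs_add_a_shallow; auto.
  - apply bounded_fn_plus; auto using bounded_fn_shallow.
Qed.

Lemma rsum_coord_bounded (l : nat -> R -> R) m : (forall i, cont_R (l i)) ->
  exists B, 0 <= B /\ forall x, in_cube m x -> Rabs (rsum (fun i => l i (x i)) 0 m) <= B.
Proof.
  intros Hc. induction m as [|m [B [HB0 HB]]].
  - exists 0. split; [lra|]. intros. simpl. rewrite Rabs_R0. lra.
  - destruct (cont_R_bounded (l m) 0 1 (Hc m) ltac:(lra)) as [Bm HBm].
    exists (B + Rabs Bm). split; [pose proof (Rabs_pos Bm); lra|].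
    intros x Hx. rewrite rsum_S_last. simpl (0 + m)%nat.
    eapply Rle_trans; [apply Rabs_triang|].
    assert (Rabs (rsum (fun i => l i (x i)) 0 m) <= B) by (apply HB; intros i Hi; apply Hx; lia).
    assert (Rabs (l m (x m)) <= Bm) by (apply HBm, Hx; lia).
    pose proof (Rle_abs Bm). lra.
Qed.

(* Load an approximation of [sum_i l_i (x_i)] into [t], then add to [a] a shallow
   approximation of [K exp] evaluated at [t]. *)
Lemma addable_exp_coord_sum K (l : nat -> R -> R) : (forall i, cont_R (l i)) ->
  addable (fun x => K * exp (rsum (fun i => l i (x i)) 0 d)).
Proof.
  intros Hc. destruct (rsum_coord_bounded l d Hc) as [Hb [Hb0 HHb]].
  apply addable_lim.
  { exists (Rabs K * exp Hb). intros x Hx. rewrite Rabs_mult, (Rabs_right (exp _))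
      by (apply Rle_ge, Rlt_le, exp_pos).
    apply Rmult_le_compat_l; [apply Rabs_pos|].
    specialize (HHb x Hx). apply Rabs_le_between in HHb.
    destruct (Rle_lt_or_eq_dec _ _ (proj2 HHb)) as [Hlt| ->];
      [left; apply exp_increasing; auto|right; reflexivity]. }
  intros eps He.
  assert (HKexp : cont_R (fun z => K * exp z))
    by (apply cont_R_scal; intros z; apply continuous_exp).
  destruct (shallow_approx_cont _ HKexp (Hb + 1) (eps / 2)) as (l0 & c00 & Hn0); [lra|].
  destruct (unif_cont_interval _ (cont_R_shallow c00 l0) (- Hb - 1) (Hb + 1) (eps / 2))
    as [mu [Hmu Hu]]; [lra|].
  set (m := Rmin 1 mu). assert (Hm : 0 < m <= 1) by (split; [apply Rmin_glb_lt; lra|apply Rmin_l]).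
  assert (Hmmu : m <= mu) by apply Rmin_r.
  pose proof (pos_INR d).
  destruct (t_loadable_coord_sum l (m / (INR d + 1)) d Hc) as (h & Hbh & Hload & Herr);
    [apply Rdiv_lt_0_compat; lra|lia|].
  exists (fun x => c00 + shallow l0 (h x)).
  split; [apply addable_shallow_of_loadable; auto|].
  intros x Hx. specialize (Herr x Hx). specialize (HHb x Hx).
  set (hx := rsum (fun i => l i (x i)) 0 d) in *.
  assert (Hh : Rabs (h x - hx) <= m).
  { eapply Rle_trans; [apply Herr|].
    apply Rle_trans with ((INR d + 1) * (m / (INR d + 1))); [|right; field; lra].
    apply Rmult_le_compat_r; [apply Rlt_le, Rdiv_lt_0_compat|]; lra. }
  apply Rabs_le_between in HHb. apply Rabs_le_between in Hh as Hh'.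
  assert (Rabs (c00 + shallow l0 (h x) - (c00 + shallow l0 hx)) <= eps / 2) by (apply Hu; lra).
  assert (Rabs (K * exp hx - (c00 + shallow l0 hx)) <= eps / 2)
    by (apply Hn0, Rabs_le_between; lra).
  replace (c00 + shallow l0 (h x) - K * exp hx) with
    ((c00 + shallow l0 (h x) - (c00 + shallow l0 hx)) - (K * exp hx - (c00 + shallow l0 hx)))
    by ring.
  eapply Rle_trans; [apply Rabs_triang|]. rewrite Rabs_Ropp. lra.
Qed.

(* The product of tents is within [eta (2 ^ d - 1)] of [exp (sum_i ln (tent_i + eta))]. *)
Lemma addable_tent_prod N c K : addable (fun x => K * tent_prod N x d c).
Proof.
  pose proof (Rabs_pos K) as HK. assert (H2d : 0 < 2 ^ d) by (apply pow_lt; lra).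
  apply addable_lim.
  { exists (Rabs K). intros x Hx.
    destruct (tent_prod_shift_close N x d c 0 ltac:(lra)) as [[H1 H2] _].
    rewrite Rabs_mult, (Rabs_right (tent_prod _ _ _ _)) by lra. nra. }
  intros eps He.
  set (eta := Rmin 1 (eps / (Rabs K * 2 ^ d + 1))).
  assert (Heta : 0 < eta <= 1).
  { split; [apply Rmin_glb_lt; [lra|apply Rdiv_lt_0_compat; nra]|apply Rmin_l]. }
  assert (Heta2 : eta * (Rabs K * 2 ^ d + 1) <= eps).
  { apply Rle_trans with (eps / (Rabs K * 2 ^ d + 1) * (Rabs K * 2 ^ d + 1)); [|right; field; nra].
    apply Rmult_le_compat_r; [nra|apply Rmin_r]. }
  set (l := fun i s => ln (tent (INR N * s - INR (c i)) + eta)).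
  exists (fun x => K * exp (rsum (fun i => l i (x i)) 0 d)). split.
  - apply addable_exp_coord_sum. intros i. unfold l.
    apply cont_R_ln_comp.
    + apply cont_R_plus; [|apply cont_R_const].
      apply (cont_R_ext (fun s => tent (INR N * s + - INR (c i)))); [intros; f_equal; ring|].
      apply (cont_R_comp (fun s => INR N * s + - INR (c i)));
        [apply cont_R_affine|apply cont_R_tent].
    + intros s. pose proof (tent_range (INR N * s - INR (c i))). lra.
  - intros x Hx. unfold l. rewrite exp_rsum_ln_tent by lra.
    destruct (tent_prod_shift_close N x d c eta ltac:(lra)) as [_ [[H1 H2] H3]].
    rewrite <- Rmult_minus_distr_l, Rabs_mult, (Rabs_right (tent_prod_shift _ _ _ _ _ - _)) by lra.
    apply Rle_trans with (Rabs K * (eta * (2 ^ d - 1))); [apply Rmult_le_compat_l; lra|nra].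
Qed.

(* The tent interpolants [sum_c f (c / N) prod_i tent (N x_i - c_i)] converge to [f]. *)
Theorem deep_approx_regs_cont f : cont_cube d f -> deep_approx (regs f zero_fn zero_fn).
Proof.
  intros Hf. apply deep_approx_lim. intros e He.
  destruct (unif_cont_cube d f Hf e He) as [dl [Hdl Hu]].
  destruct (INR_archimed dl 1 Hdl) as [N HN].
  assert (HN0 : (0 < N)%nat) by (destruct N; simpl in HN; lia || lra).
  assert (HNdl : / INR N < dl).
  { assert (0 < INR N) by (apply lt_0_INR; auto).
    apply (Rmult_lt_reg_l (INR N)); [auto|]. rewrite Rinv_r; lra. }
  set (G := fun x => grid_sum N d (fun c => f (grid_pt N c) * tent_prod N x d c)).
  exists (regs G zero_fn zero_fn). split.
  - destruct (addable_grid_sum N d (fun c x => f (grid_pt N c) * tent_prod N x d c)) as [_ HG];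
      [intros; apply addable_tent_prod|].
    eapply deep_approx_regs_ext; [|apply (HG zero_fn (bounded_fn_const 0) deep_approx_regs_init)].
    intros x Hx. unfold G. split; [ring|auto].
  - intros x Hx k Hk. unfold regs. case_nat; try (rewrite Rminus_diag, Rabs_R0; lra).
    rewrite Rabs_minus_sym. apply (grid_interp_error d f N dl e); auto.
Qed.

End Registers.

End Activation.

Lemma sum0_single_neuron p k0 q0 (c0 : nat -> R) (B : nat -> nat -> R -> R) (y : nat -> R) :
  (k0 < p)%nat ->
  sum0 p (fun k => sum1 (if Nat.eqb k k0 then q0 else 1%nat)
                        (fun r => (if Nat.eqb k k0 then c0 r else 0) * B k r (y k))) =
  sum1 q0 (fun r => c0 r * B k0 r (y k0)).
Proof.
  intros Hk. unfold sum0.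
  rewrite (rsum_ext _ (fun k => delta_nat k k0 * sum1 q0 (fun r => c0 r * B k0 r (y k0)))).
  - apply (rsum_delta (fun _ => _)). lia.
  - intros k _. unfold delta_nat. destruct (Nat.eqb_spec k k0) as [->|]; [ring|].
    unfold sum1. simpl. ring.
Qed.

Lemma cont01_affine a s : cont01 (fun y => a + s * y).
Proof.
  intros y Hy e He. exists (e / (Rabs s + 1)).
  pose proof (Rabs_pos s). split; [apply Rdiv_lt_0_compat; lra|].
  intros z Hz Hzy. replace (a + s * z - (a + s * y)) with (s * (z - y)) by ring.
  rewrite Rabs_mult.
  apply Rle_lt_trans with (Rabs s * (e / (Rabs s + 1))); [apply Rmult_le_compat_l; lra|].
  apply Rlt_le_trans with ((Rabs s + 1) * (e / (Rabs s + 1))); [|right; field; lra].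
  apply Rmult_lt_compat_r; [apply Rdiv_lt_0_compat|]; lra.
Qed.

(* Since hidden neurons take values in [0,1], the basis functions of neuron [k0]
   can reproduce its affine read-out; all other neurons get zero coefficients. *)
Lemma HDANN2_of_neuron_readout sigma d p B k0 n W1 b1 W bl (a s : R) f e :
  (forall t, 0 <= sigma t <= 1) -> (k0 < p)%nat -> is_basis (B k0) -> 0 < e ->
  (forall x, in_cube d x -> Rabs (a + s * layer sigma d p W1 b1 W bl n x k0 - f x) <= e) ->
  exists q c b0, (forall k, (k < p)%nat -> (1 <= q k)%nat) /\
    forall x, in_cube d x -> Rabs (f x - HDANN2 sigma d p B (S n) W1 b1 W bl q c b0 x) <= 2 * e.
Proof.
  intros Hsig Hk0 HB He Hn.
  destruct (HB _ (cont01_affine a s) e He) as (q0 & c0 & b0 & Hq0 & Hbas).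
  exists (fun k => if Nat.eqb k k0 then q0 else 1%nat),
    (fun k r => if Nat.eqb k k0 then c0 r else 0), b0.
  split; [intros k _; destruct (Nat.eqb k k0); lia|].
  intros x Hx. unfold HDANN2. simpl pred. rewrite sum0_single_neuron by auto.
  specialize (Hn x Hx). set (y := layer sigma d p W1 b1 W bl n x k0) in *.
  assert (Hy : 0 <= y <= 1) by (unfold y; destruct n; apply Hsig).
  specialize (Hbas y Hy). cbv beta in Hbas.
  replace (f x - (sum1 q0 (fun r => c0 r * B k0 r y) + b0)) with
    ((a + s * y - (sum1 q0 (fun r => c0 r * B k0 r y) + b0)) - (a + s * y - f x)) by ring.
  eapply Rle_trans; [apply Rabs_triang|]. rewrite Rabs_Ropp. lra.
Qed.

Theorem theorem3 (d p : nat) (B : nat -> nat -> R -> R) (sigma : R -> R) :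
  (1 <= d)%nat -> (d + 3 <= p)%nat ->
  (forall k, (k < p)%nat -> is_basis (B k)) ->
  (forall t, 0 <= sigma t <= 1) ->
  (forall t, continuous sigma t) ->
  (exists x0, C1_at_nonzero sigma x0) ->
  forall f : (nat -> R) -> R, cont_cube d f ->
  forall eps, 0 < eps ->
  exists (L : nat) (W1 : nat -> nat -> R) (b1 : nat -> R)
         (W : nat -> nat -> nat -> R) (bl : nat -> nat -> R)
         (q : nat -> nat) (c : nat -> nat -> R) (b0 : R),
    (1 <= L)%nat /\ (forall k, (k < p)%nat -> (1 <= q k)%nat) /\
    exists M, M < eps /\
      forall x, in_cube d x ->
        Rabs (f x - HDANN2 sigma d p B L W1 b1 W bl q c b0 x) <= M.
Proof.
  intros _ Hp HB Hsig Hcont [x0 [[r [Hr Hder]] [_ HD0]]] f Hf eps He.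
  assert (HD : is_derive sigma x0 (Derive sigma x0)).
  { apply Derive_correct, Hder. rewrite Rminus_diag, Rabs_R0. lra. }
  destruct (deep_approx_regs_cont sigma Hsig Hcont x0 _ HD HD0 d p Hp f Hf (eps / 4))
    as (n & W1 & b1 & W & bl & a & s & Hn); [lra|].
  assert (Hread : forall x, in_cube d x ->
            Rabs (a d + s d * layer sigma d p W1 b1 W bl n x d - f x) <= eps / 4).
  { intros x Hx. specialize (Hn x Hx d ltac:(lia)).
    replace (regs d f (fun _ => 0) (fun _ => 0) x d) with (f x) in Hn
      by (unfold regs; case_nat; auto).
    exact Hn. }
  destruct (HDANN2_of_neuron_readout sigma d p B d n W1 b1 W bl (a d) (s d) f (eps / 4)
              Hsig ltac:(lia) (HB d ltac:(lia)) ltac:(lra) Hread) as (q & c & b0 & Hq & Happ).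
  exists (S n), W1, b1, W, bl, q, c, b0.
  split; [lia|]. split; [auto|]. exists (2 * (eps / 4)). split; [lra|auto].
Qed.
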